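(* Let $1\le p<\infty$, $\theta,\rho\in(0,1)$, $\Omega\in\mathbb{IR}^{d_0}$ a box with nonempty interior, and $\Phi:\mathbb R^{d_0}\to\mathbb R^{d_{L+1}}$ a feedforward neural network with twice differentiable activation $\sigma$ such that $\sigma,\sigma',\sigma''$ admit interval enclosures $\Sigma,\Sigma',\Sigma''$ that are Hölder continuous on $\mathbb{IR}$. Define $f_{\Phi,2,p}(x)=\sum_{i=1}^{d_{L+1}}\sum_{|\alpha|\le2}|D^\alpha\Phi_i(x)|^p$ and $$F_{\Phi,2,p}(K)=\sum_{i=1}^{d_{L+1}}\Big(|\mathrm{Fval}_{\Phi,L+1,\Sigma}(K)_i|^p+\sum_{j=1}^{d_0}|\mathrm{Jac}_{\Phi,0}(K)_{ij}|^p+\sum_{1\le j\le k\le d_0}|\mathrm{Hess}_{\Phi,i,0}(K)_{jk}|^p\Big).$$ Then $f_{\Phi,2,p}$ is continuous, $F_{\Phi,2,p}$ is a Hölder continuous interval enclosure of $f_{\Phi,2,p}$ on $\Omega$, and AdaQuad with integrand $f_{\Phi,2,p}$, enclosure $F_{\Phi,2,p}$, a positive-weight quadrature rule exact for constants, marking $\mathrm{D\ddot orfler}_\theta$ and refinement $\mathrm{H\ddot older}_\rho$ yields for all $n$ $$\big|\,\|\Phi\|_{W^{2,p}(\Omega;\mathbb R^{d_{L+1}})}-\mathrm Q_n^{1/p}\big|\le\eta_n^{1/p},\qquad\eta_{n+1}\le(1-\theta(1-\rho))\eta_n.$$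
   Context: $\|\Phi\|_{W^{k,p}(\Omega;\mathbb R^m)}=(\sum_{i=1}^m\sum_{|\alpha|\le k}\int_\Omega|D^\alpha\Phi_i|^pdx)^{1/p}$, sum over multi-indices each once. Intervals, boxes, interval arithmetic $X\circ Y=\{x\circ y\}$, interval matrix products via usual formula (left to right), $\odot$ entrywise; width $w$ (max entry width); $|X|=\{|x|:x\in X\}$, $X^\gamma=[\underline X^\gamma,\overline X^\gamma]$ for $\underline X\ge0$. Interval enclosure on $\Omega$: inclusion isotonic $F$ with $\phi(K)\subset F(K)$ for boxes $K\subset\Omega$; Hölder continuous: $w(F(K))\le Cw(K)^\gamma$. Network: weights $W^{(\ell)}$, biases $b^{(\ell)}$, $z^{(\ell)}=W^{(\ell-1)}x^{(\ell-1)}+b^{(\ell-1)}$, $x^{(\ell)}=\sigma(z^{(\ell)})$, $x^{(0)}=u$, $\Phi=z^{(L+1)}$. $\mathrm{Fval}_{\Phi,\ell,\Sigma}(K)$: $X^{(0)}=K$; for $k=0,\dots,\ell-1$: $Z^{(k+1)}=W^{(k)}X^{(k)}+b^{(k)}$, $X^{(k+1)}=\Sigma(Z^{(k+1)})$; return $Z^{(\ell)}$. $\mathrm{Jac}_{\Phi,\ell}(K)$: $J^{(L)}=W^{(L)}$; for $k=L-1,\dots,\ell$: $J^{(k)}=(J^{(k+1)}\mathrm{diag}(\Sigma'(\mathrm{Fval}_{\Phi,k+1,\Sigma}(K))))W^{(k)}$; return $J^{(\ell)}$. $\mathrm{Hess}_{\Phi,i,\ell}(K)$: $H^{(L)}=0$;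 for $k=L-1,\dots,\ell$, with $Z^{(k+1)}=\mathrm{Fval}_{\Phi,k+1,\Sigma}(K)$, $J_i^{(k+1)}$ the $i$-th row of $\mathrm{Jac}_{\Phi,k+1}(K)$: $H^{(k)}=W^{(k)T}\mathrm{diag}(\Sigma'(Z^{(k+1)}))H^{(k+1)}\mathrm{diag}(\Sigma'(Z^{(k+1)}))W^{(k)}+W^{(k)T}\mathrm{diag}(\Sigma''(Z^{(k+1)})\odot J_i^{(k+1)})W^{(k)}$; return $H^{(\ell)}$. AdaQuad: $\mathcal P_0=\{\Omega\}$; with $\eta_K=w(F(K))\mathrm{vol}(K)$, $\mathcal P_{n+1}=(\mathcal P_n\setminus\widetilde{\mathcal P}_n)\cup\bigcup_{K\in\widetilde{\mathcal P}_n}\mathcal R(K)$ with $\widetilde{\mathcal P}_n$ the marked set; $\mathrm Q_n=\sum_{K\in\mathcal P_n}\mathcal I(f,K)$, $\eta_n=\sum_{K\in\mathcal P_n}\eta_K$. Quadrature $\mathcal I(f,K)=\sum_iw_if(x_i)$, $x_i\in K$, $w_i>0$, $\sum w_i=\mathrm{vol}(K)$. $\mathrm{D\ddot orfler}_\theta$: repeatedly mark all unmarked elements of maximal indicator until the marked sum is $\ge\theta$ times the total. $\mathrm{H\ddot older}_\rho(K)$ with a Hölder constant $C$ and exponent $\gamma$ of $F$: if $\eta_K=0$ return $\{K\}$; else split each side $K_i$ (length $l_i$) uniformly into $m_i=\lceil l_i(C\mathrm{vol}(K)/(\rho\eta_K))^{1/\gamma}\rceil$ pieces and return all product boxes. 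*)

From Stdlib Require Import Reals Lra List.
From Coquelicot Require Import Coquelicot.
Import ListNotations.
Open Scope R_scope.

Fixpoint rsum (n : nat) (f : nat -> R) : R :=
  match n with O => 0 | S m => rsum m f + f m end.

Fixpoint rprod (n : nat) (f : nat -> R) : R :=
  match n with O => 1 | S m => rprod m f * f m end.

(* max_{j<n} f j (0 for n = 0; used only for nonnegative widths) *)
Fixpoint rmaxn (n : nat) (f : nat -> R) : R :=
  match n with O => 0 | S m => Rmax (rmaxn m f) (f m) end.

Definition lsum (l : list R) : R := fold_right Rplus 0 l.

(* x^y for x >= 0 and y > 0 (with 0^y = 0) *)
Definition rpow (x y : R) : R := if Rle_dec x 0 then 0 else Rpower x y.

(* ceiling of a real, as a natural number (negative values go to 0) *)
Definition ceil_nat (x : R) : nat := Z.to_nat (1 - up (- x)).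

(* ---------- points of R^n, coordinates indexed by nat (only j < n matter) ---------- *)

Definition upd {A : Type} (x : nat -> A) (j : nat) (t : A) : nat -> A :=
  fun m => if Nat.eqb m j then t else x m.

Definition pd (j : nat) (g : (nat -> R) -> R) (x : nat -> R) : R :=
  Derive (fun t => g (upd x j t)) (x j).

Definition cont_Rn (n : nat) (f : (nat -> R) -> R) : Prop :=
  forall x eps, 0 < eps -> exists delta, 0 < delta /\
    forall y, (forall j, (j < n)%nat -> Rabs (y j - x j) < delta) ->
      Rabs (f y - f x) < eps.

Record Itv := mkItv { lo : R; hi : R }.

Definition proper (X : Itv) : Prop := lo X <= hi X.
Definition inI (x : R) (X : Itv) : Prop := lo X <= x <= hi X.
Definition subI (X Y : Itv) : Prop := lo Y <= lo X /\ hi X <= hi Y.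
Definition width (X : Itv) : R := hi X - lo X.
Definition pt (x : R) : Itv := mkItv x x.

Definition iadd (X Y : Itv) : Itv := mkItv (lo X + lo Y) (hi X + hi Y).
Definition imul (X Y : Itv) : Itv :=
  let a := lo X * lo Y in let b := lo X * hi Y in
  let c := hi X * lo Y in let e := hi X * hi Y in
  mkItv (Rmin (Rmin a b) (Rmin c e)) (Rmax (Rmax a b) (Rmax c e)).
Definition iabs (X : Itv) : Itv :=
  mkItv (if Rle_dec 0 (lo X) then lo X else if Rle_dec (hi X) 0 then - hi X else 0)
        (Rmax (Rabs (lo X)) (Rabs (hi X))).
(* X^g = [lo^g, hi^g] (used for lo >= 0) *)
Definition ipow (X : Itv) (g : R) : Itv := mkItv (rpow (lo X) g) (rpow (hi X) g).

Fixpoint isum (n : nat) (f : nat -> Itv) : Itv :=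
  match n with O => pt 0 | S m => iadd (isum m f) (f m) end.

Definition imxmul (n : nat) (A B : nat -> nat -> Itv) : nat -> nat -> Itv :=
  fun i j => isum n (fun l => imul (A i l) (B l j)).
Definition imxadd (A B : nat -> nat -> Itv) : nat -> nat -> Itv :=
  fun i j => iadd (A i j) (B i j).
Definition idiag (v : nat -> Itv) : nat -> nat -> Itv :=
  fun i j => if Nat.eqb i j then v i else pt 0.
Definition ptm (M : nat -> nat -> R) : nat -> nat -> Itv := fun i j => pt (M i j).
Definition ptmT (M : nat -> nat -> R) : nat -> nat -> Itv := fun i j => pt (M j i).

Definition enclosure_IR (phi : R -> R) (Sg : Itv -> Itv) : Prop :=
  (forall X Y, proper X -> subI X Y -> subI (Sg X) (Sg Y)) /\
  (forall X x, proper X -> inI x X -> inI (phi x) (Sg X)).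

Definition holder_IR (Sg : Itv -> Itv) : Prop :=
  exists C g, 0 <= C /\ 0 < g /\
    forall X, proper X -> width (Sg X) <= C * rpow (width X) g.

Definition box := nat -> Itv.
Definition bproper (n : nat) (K : box) : Prop := forall j, (j < n)%nat -> proper (K j).
Definition binterior (n : nat) (K : box) : Prop := forall j, (j < n)%nat -> lo (K j) < hi (K j).
Definition bsub (n : nat) (K K' : box) : Prop := forall j, (j < n)%nat -> subI (K j) (K' j).
Definition inbox (n : nat) (x : nat -> R) (K : box) : Prop :=
  forall j, (j < n)%nat -> inI (x j) (K j).
Definition bvol (n : nat) (K : box) : R := rprod n (fun j => width (K j)).
Definition bwidth (n : nat) (K : box) : R := rmaxn n (fun j => width (K j)).

Definition enclosure_box (n : nat) (Om : box) (phi : (nat -> R) -> R) (F : box -> Itv) : Prop :=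
  (forall K K', bproper n K -> bsub n K K' -> bsub n K' Om -> subI (F K) (F K')) /\
  (forall K, bproper n K -> bsub n K Om -> forall x, inbox n x K -> inI (phi x) (F K)).

Definition holder_const (n : nat) (Om : box) (F : box -> Itv) (C g : R) : Prop :=
  0 <= C /\ 0 < g /\
  forall K, bproper n K -> bsub n K Om -> width (F K) <= C * rpow (bwidth n K) g.

Definition holder_box (n : nat) (Om : box) (F : box -> Itv) : Prop :=
  exists C g, holder_const n Om F C g.

Fixpoint iint (Om : box) (m : nat) (g : (nat -> R) -> R) (x : nat -> R) : R :=
  match m with
  | O => g x
  | S m' => RInt (fun t => iint Om m' g (upd x m' t)) (lo (Om m')) (hi (Om m'))
  end.
Definition box_integral (n : nat) (Om : box) (g : (nat -> R) -> R) : R :=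
  iint Om n g (fun _ => 0).

Record Net := mkNet {
  nL : nat;
  nd : nat -> nat;               (* widths d_0, ..., d_{L+1} *)
  nW : nat -> nat -> nat -> R;   (* nW l i j = W^(l)_{ij}, i < d_{l+1}, j < d_l *)
  nb : nat -> nat -> R
}.

Fixpoint xval (N : Net) (s : R -> R) (l : nat) (u : nat -> R) : nat -> R :=
  match l with
  | O => u
  | S k => fun i => s (rsum (nd N k) (fun j => nW N k i j * xval N s k u j) + nb N k i)
  end.

Definition Phi (N : Net) (s : R -> R) (i : nat) (u : nat -> R) : R :=
  rsum (nd N (nL N)) (fun j => nW N (nL N) i j * xval N s (nL N) u j) + nb N (nL N) i.

Definition izstep (N : Net) (k : nat) (X : nat -> Itv) : nat -> Itv :=
  fun i => iadd (isum (nd N k) (fun j => imul (pt (nW N k i j)) (X j))) (pt (nb N k i)).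

Fixpoint iX (N : Net) (Sg : Itv -> Itv) (k : nat) (K : box) : nat -> Itv :=
  match k with
  | O => K
  | S k' => fun i => Sg (izstep N k' (iX N Sg k' K) i)
  end.

Definition Fval (N : Net) (Sg : Itv -> Itv) (l : nat) (K : box) : nat -> Itv :=
  match l with
  | O => K
  | S k => izstep N k (iX N Sg k K)
  end.

(* jac_aux m = J^(L-m);  Jac_{Phi,l}(K) = jac_aux (L - l) *)
Fixpoint jac_aux (N : Net) (Sg Sg1 : Itv -> Itv) (K : box) (m : nat) : nat -> nat -> Itv :=
  match m with
  | O => ptm (nW N (nL N))
  | S m' =>
      let k := (nL N - S m')%nat in
      imxmul (nd N (k + 1))
        (imxmul (nd N (k + 1)) (jac_aux N Sg Sg1 K m')
                (idiag (fun l => Sg1 (Fval N Sg (k + 1) K l))))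
        (ptm (nW N k))
  end.
Definition Jac (N : Net) (Sg Sg1 : Itv -> Itv) (l : nat) (K : box) : nat -> nat -> Itv :=
  jac_aux N Sg Sg1 K (nL N - l).

(* hess_aux i m = H^(L-m);  Hess_{Phi,i,l}(K) = hess_aux i (L - l) *)
Fixpoint hess_aux (N : Net) (Sg Sg1 Sg2 : Itv -> Itv) (K : box) (i : nat) (m : nat)
  : nat -> nat -> Itv :=
  match m with
  | O => fun _ _ => pt 0
  | S m' =>
      let k := (nL N - S m')%nat in
      let n1 := nd N (k + 1) in
      let Z := Fval N Sg (k + 1) K in
      let D := idiag (fun l => Sg1 (Z l)) in
      let Wt := ptmT (nW N k) in
      let Wk := ptm (nW N k) in
      let Ji := fun l => jac_aux N Sg Sg1 K m' i l in
      imxadd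
        (imxmul n1 (imxmul n1 (imxmul n1 (imxmul n1 Wt D) (hess_aux N Sg Sg1 Sg2 K i m')) D) Wk)
        (imxmul n1 (imxmul n1 Wt (idiag (fun l => imul (Sg2 (Z l)) (Ji l)))) Wk)
  end.
Definition Hess (N : Net) (Sg Sg1 Sg2 : Itv -> Itv) (i l : nat) (K : box) : nat -> nat -> Itv :=
  hess_aux N Sg Sg1 Sg2 K i (nL N - l).

(* sum over i, and over multi-indices |alpha| <= 2: alpha = 0, e_j, e_j + e_k (j <= k) *)
Definition f_Phi (N : Net) (s : R -> R) (p : R) (x : nat -> R) : R :=
  let d0 := nd N 0 in
  rsum (nd N (nL N + 1)) (fun i =>
    rpow (Rabs (Phi N s i x)) p
    + rsum d0 (fun j => rpow (Rabs (pd j (Phi N s i) x)) p)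
    + rsum d0 (fun j => rsum (d0 - j) (fun t =>
         rpow (Rabs (pd (j + t) (pd j (Phi N s i)) x)) p))).

Definition F_Phi (N : Net) (Sg Sg1 Sg2 : Itv -> Itv) (p : R) (K : box) : Itv :=
  let d0 := nd N 0 in
  isum (nd N (nL N + 1)) (fun i =>
    iadd (iadd (ipow (iabs (Fval N Sg (nL N + 1) K i)) p)
               (isum d0 (fun j => ipow (iabs (Jac N Sg Sg1 0 K i j)) p)))
         (isum d0 (fun j => isum (d0 - j) (fun t =>
               ipow (iabs (Hess N Sg Sg1 Sg2 i 0 K j (j + t))) p)))).

Definition sobolev_norm (N : Net) (s : R -> R) (p : R) (Om : box) : R :=
  let d0 := nd N 0 in
  let I := box_integral d0 Om in
  rpow (rsum (nd N (nL N + 1)) (fun i =>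
      I (fun x => rpow (Rabs (Phi N s i x)) p)
    + rsum d0 (fun j => I (fun x => rpow (Rabs (pd j (Phi N s i) x)) p))
    + rsum d0 (fun j => rsum (d0 - j) (fun t =>
         I (fun x => rpow (Rabs (pd (j + t) (pd j (Phi N s i)) x)) p)))))
   (1 / p).

Definition quad_rule (n : nat) (Qr : box -> list (R * (nat -> R))) : Prop :=
  forall K, binterior n K ->
    (forall wx, In wx (Qr K) -> 0 < fst wx /\ inbox n (snd wx) K) /\
    lsum (map fst (Qr K)) = bvol n K.

Definition quad (Qr : box -> list (R * (nat -> R))) (f : (nat -> R) -> R) (K : box) : R :=
  lsum (map (fun wx => fst wx * f (snd wx)) (Qr K)).

Definition etaK (n : nat) (F : box -> Itv) (K : box) : R := width (F K) * bvol n K.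

Definition maxlist (l : list R) : R :=
  match l with [] => 0 | x :: l' => fold_left Rmax l' x end.

Fixpoint dorfler_aux (theta tot : R) (es : list R) (fuel : nat) (mask : list bool)
  : list bool :=
  match fuel with
  | O => mask
  | S f =>
      let msum := lsum (map fst (filter snd (combine es mask))) in
      if Rle_dec (theta * tot) msum then mask
      else
        let mx := maxlist (map fst (filter (fun eb : R * bool => negb (snd eb)) (combine es mask))) in
        dorfler_aux theta tot es f
          (map (fun eb : R * bool => if snd eb then true
                          else if Req_EM_T (fst eb) mx then true else false)
               (combine es mask))
  end.

Definition dorfler (theta : R) (es : list R) : list bool :=
  dorfler_aux theta (lsum es) es (S (length es)) (repeat false (length es)).

Definition piece (X : Itv) (m t : nat) : Itv :=
  mkItv (lo X + INR t * width X / INR m) (lo X + INR (S t) * width X / INR m).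

Fixpoint split_boxes (K : box) (m : nat -> nat) (c : nat) : list box :=
  match c with
  | O => [K]
  | S c' => flat_map (fun B => map (fun t => upd B c' (piece (K c') (m c') t))
                                   (seq 0 (m c')))
                     (split_boxes K m c')
  end.

Definition holder_refine (n : nat) (F : box -> Itv) (C g rho : R) (K : box) : list box :=
  let e := etaK n F K in
  if Req_EM_T e 0 then [K]
  else split_boxes K
         (fun j => ceil_nat (width (K j) * rpow (C * bvol n K / (rho * e)) (1 / g))) n.

Definition adaquad_step (n : nat) (F : box -> Itv) (theta C g rho : R) (P : list box)
  : list box :=
  let mask := dorfler theta (map (etaK n F) P) in
  let PM := combine P mask in
  map fst (filter (fun Kb : box * bool => negb (snd Kb)) PM)
  ++ flat_map (fun Kb : box * bool => holder_refine n F C g rho (fst Kb)) (filter snd PM).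

Fixpoint adaquad_partition (n : nat) (Om : box) (F : box -> Itv) (theta C g rho : R)
  (k : nat) : list box :=
  match k with
  | O => [Om]
  | S k' => adaquad_step n F theta C g rho (adaquad_partition n Om F theta C g rho k')
  end.

Definition adaquad_Q (n : nat) (Om : box) (F : box -> Itv) (theta C g rho : R)
  (Qr : box -> list (R * (nat -> R))) (f : (nat -> R) -> R) (k : nat) : R :=
  lsum (map (quad Qr f) (adaquad_partition n Om F theta C g rho k)).

Definition adaquad_eta (n : nat) (Om : box) (F : box -> Itv) (theta C g rho : R)
  (k : nat) : R :=
  lsum (map (etaK n F) (adaquad_partition n Om F theta C g rho k)).

(* Every interval operation used to build [F_Phi] (sums, products, [|.|^p], the enclosures of
   sigma, sigma', sigma'') preserves properness, inclusion isotonicity and Hoelder continuity on the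
   sub-boxes of Omega, so [F_Phi] inherits them.  At a point of [K], the recursions defining
   [Jac] and [Hess] are the backward chain rule of the network, so the real Jacobian and Hessian lie
   in their interval versions and [f_Phi] is enclosed by [F_Phi].  On a box [K], both the integral
   and the quadrature of [f_Phi] then lie in [vol K * F_Phi K], which has width [eta_K]; summing over
   the partition and using that [t |-> t ^ (1/p)] is subadditive gives the error bound.  Finally
   the Hoelder refinement of a box divides its indicator by at least [rho], and Doerfler marking
   selects a [theta]-fraction of the total indicator, which gives the contraction
   [eta_(n+1) <= (1 - theta (1 - rho)) eta_n]. *)

From Stdlib Require Import Reals Lra Lia List ZArith FunctionalExtensionality.
From Coquelicot Require Import Coquelicot.
Import ListNotations.
Open Scope R_scope.

(** * Finite sums *)

Lemma rsum_ext n f g : (forall j, (j < n)%nat -> f j = g j) -> rsum n f = rsum n g.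
Proof.
  induction n as [|n IH]; simpl; intros H; auto.
  rewrite IH by (intros; apply H; lia). now rewrite H by lia.
Qed.

Lemma rsum_add n f g : rsum n (fun j => f j + g j) = rsum n f + rsum n g.
Proof. induction n as [|n IH]; simpl; [lra|]. rewrite IH; lra. Qed.

Lemma rsum_mull n c f : rsum n (fun j => c * f j) = c * rsum n f.
Proof. induction n as [|n IH]; simpl; [lra|]. rewrite IH; lra. Qed.

Lemma rsum_mulr n c f : rsum n (fun j => f j * c) = rsum n f * c.
Proof. induction n as [|n IH]; simpl; [lra|]. rewrite IH; lra. Qed.

Lemma rsum_const0 n : rsum n (fun _ => 0) = 0.
Proof. induction n as [|n IH]; simpl; [lra|]. rewrite IH; lra. Qed.

Lemma rsum_comm n m f :
  rsum n (fun i => rsum m (fun j => f i j)) = rsum m (fun j => rsum n (fun i => f i j)).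
Proof.
  induction n as [|n IH]; simpl.
  - now rewrite rsum_const0.
  - now rewrite IH, <- rsum_add.
Qed.

Lemma rsum_mul_rsum n m f g :
  rsum n f * rsum m g = rsum n (fun a => rsum m (fun b => f a * g b)).
Proof.
  rewrite <- rsum_mulr. apply rsum_ext. intros a _. now rewrite <- rsum_mull.
Qed.

Lemma rsum_le n f g : (forall j, (j < n)%nat -> f j <= g j) -> rsum n f <= rsum n g.
Proof.
  induction n as [|n IH]; simpl; intros H; [lra|].
  assert (f n <= g n) by (apply H; lia).
  assert (rsum n f <= rsum n g) by (apply IH; intros; apply H; lia). lra.
Qed.

Lemma rsum_ge0 n f : (forall j, (j < n)%nat -> 0 <= f j) -> 0 <= rsum n f.
Proof. intros H. rewrite <- (rsum_const0 n). now apply rsum_le. Qed.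

Lemma rsum_delta n b f : (b < n)%nat -> rsum n (fun c => if Nat.eqb c b then f c else 0) = f b.
Proof.
  induction n as [|n IH]; intros Hb; [lia|]. simpl. destruct (Nat.eqb_spec n b).
  - subst. rewrite (rsum_ext _ _ (fun _ => 0)), rsum_const0; [lra|].
    intros j Hj. destruct (Nat.eqb_spec j b); [lia|auto].
  - rewrite IH by lia. lra.
Qed.

Lemma rsum_mul_delta n c f : (c < n)%nat ->
  rsum n (fun a => f a * (if Nat.eqb a c then 1 else 0)) = f c.
Proof.
  intros Hc. rewrite <- (rsum_delta n c f Hc). apply rsum_ext.
  intros j _. destruct (Nat.eqb j c); ring.
Qed.

Lemma rprod_ge0 m w : (forall j, (j < m)%nat -> 0 <= w j) -> 0 <= rprod m w.
Proof.
  induction m as [|m IH]; simpl; intros H; [lra|].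
  apply Rmult_le_pos; [apply IH; intros; apply H|apply H]; lia.
Qed.

Lemma rprod_gt0 m w : (forall j, (j < m)%nat -> 0 < w j) -> 0 < rprod m w.
Proof.
  induction m as [|m IH]; simpl; intros H; [lra|].
  apply Rmult_lt_0_compat; [apply IH; intros; apply H|apply H]; lia.
Qed.

Lemma lsum_app l1 l2 : lsum (l1 ++ l2) = lsum l1 + lsum l2.
Proof. induction l1 as [|a l1 IH]; simpl; [lra|]. unfold lsum in *; simpl. rewrite IH; lra. Qed.

Lemma lsum_ge0 l : (forall x, In x l -> 0 <= x) -> 0 <= lsum l.
Proof.
  induction l as [|a l IH]; unfold lsum; simpl; intros H; [lra|].
  assert (0 <= a) by auto. assert (0 <= lsum l) by (apply IH; auto).
  unfold lsum in *; lra.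
Qed.

Lemma lsum_map_le {A} (f g : A -> R) l :
  (forall x, In x l -> f x <= g x) -> lsum (map f l) <= lsum (map g l).
Proof.
  induction l as [|a l IH]; unfold lsum; simpl; intros H; [lra|].
  assert (f a <= g a) by auto. assert (lsum (map f l) <= lsum (map g l)) by auto.
  unfold lsum in *; lra.
Qed.

Lemma lsum_map_ext {A} (f g : A -> R) l :
  (forall x, In x l -> f x = g x) -> lsum (map f l) = lsum (map g l).
Proof. intros H. now rewrite (map_ext_in f g l H). Qed.

Lemma lsum_map_mull {A} c (f : A -> R) l : lsum (map (fun x => c * f x) l) = c * lsum (map f l).
Proof. induction l as [|a l IH]; unfold lsum in *; simpl; [lra|]. rewrite IH; lra. Qed.

Lemma lsum_map_ge0 {A} (f : A -> R) l : (forall x, In x l -> 0 <= f x) -> 0 <= lsum (map f l).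
Proof.
  intros H. apply lsum_ge0. intros y Hy. apply in_map_iff in Hy.
  destruct Hy as [x [<- Hx]]. auto.
Qed.

Lemma lsum_flat_map {A B} (g : A -> list B) (f : B -> R) l :
  lsum (map f (flat_map g l)) = lsum (map (fun x => lsum (map f (g x))) l).
Proof. induction l as [|a l IH]; simpl; auto. now rewrite map_app, lsum_app, IH. Qed.

Lemma lsum_map_seq m f : lsum (map f (seq 0 m)) = rsum m f.
Proof.
  induction m as [|m IH]; auto.
  rewrite seq_S, map_app, lsum_app, IH. unfold lsum; simpl. lra.
Qed.

Lemma lsum_filter_split {A} (f : A -> R) (p : A -> bool) l :
  lsum (map f l) = lsum (map f (filter p l)) + lsum (map f (filter (fun a => negb (p a)) l)).
Proof.
  induction l as [|a l IH]; simpl; [unfold lsum; simpl; ring|].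
  destruct (p a); simpl; unfold lsum in *; simpl; rewrite IH; ring.
Qed.

Lemma lsum_map_diff_le {A} (a b e : A -> R) l :
  (forall x, In x l -> Rabs (a x - b x) <= e x) ->
  Rabs (lsum (map a l) - lsum (map b l)) <= lsum (map e l).
Proof.
  induction l as [|x l IH]; unfold lsum in *; simpl; intros H.
  - rewrite Rminus_0_r, Rabs_R0; lra.
  - eapply Rle_trans; [|apply Rplus_le_compat; [apply H; now left|apply IH; auto]].
    eapply Rle_trans; [|apply Rabs_triang]. right. f_equal. ring.
Qed.

(** * Real powers *)

Lemma rpow_eq_Rpower x g : 0 < x -> rpow x g = Rpower x g.
Proof. intros. unfold rpow. destruct (Rle_dec x 0); [lra|auto]. Qed.

Lemma rpow_nonpos x g : x <= 0 -> rpow x g = 0.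
Proof. intros. unfold rpow. destruct (Rle_dec x 0); [auto|lra]. Qed.

Lemma rpow_ge0 x g : 0 <= rpow x g.
Proof. unfold rpow. destruct (Rle_dec x 0); [lra|]. left; apply exp_pos. Qed.

Lemma rpow_gt0 x g : 0 < x -> 0 < rpow x g.
Proof. intros. rewrite rpow_eq_Rpower by auto. apply exp_pos. Qed.

Lemma rpow_le_compat x y g : 0 <= g -> x <= y -> rpow x g <= rpow y g.
Proof.
  intros Hg Hxy. destruct (Rle_dec x 0).
  - rewrite rpow_nonpos by auto. apply rpow_ge0.
  - rewrite !rpow_eq_Rpower by lra. apply Rle_Rpower_l; lra.
Qed.

Lemma rpow_mult_distr a b g : 0 <= a -> 0 <= b -> rpow (a * b) g = rpow a g * rpow b g.
Proof.
  intros Ha Hb.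
  destruct (Req_dec a 0) as [->|Ha0]; [rewrite Rmult_0_l, !(rpow_nonpos 0); lra|].
  destruct (Req_dec b 0) as [->|Hb0]; [rewrite Rmult_0_r, !(rpow_nonpos 0); lra|].
  rewrite !rpow_eq_Rpower by nra. symmetry; apply Rpower_mult_distr; lra.
Qed.

Lemma rpow_rpow x a b : 0 <= x -> rpow (rpow x a) b = rpow x (a * b).
Proof.
  intros Hx. destruct (Req_dec x 0) as [->|Hx0]; [now rewrite !(rpow_nonpos 0) by lra|].
  rewrite (rpow_eq_Rpower x), rpow_eq_Rpower, rpow_eq_Rpower by (apply exp_pos || lra).
  apply Rpower_mult.
Qed.

Lemma rpow_1 x : 0 <= x -> rpow x 1 = x.
Proof.
  intros. destruct (Req_dec x 0) as [->|]; [apply rpow_nonpos; lra|].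
  rewrite rpow_eq_Rpower by lra. apply Rpower_1; lra.
Qed.

Lemma rpow_plus x a b : 0 < x -> rpow x (a + b) = rpow x a * rpow x b.
Proof. intros. rewrite !rpow_eq_Rpower by auto. apply Rpower_plus. Qed.

Lemma rpow_Rinv x g : 0 < x -> rpow (/ x) g = / rpow x g.
Proof.
  intros. rewrite !rpow_eq_Rpower by (auto; apply Rinv_0_lt_compat; auto).
  unfold Rpower. rewrite ln_Rinv, <- exp_Ropp by auto. f_equal; ring.
Qed.

Lemma rpow_inv_exponent x g : 0 < x -> 0 < g -> rpow (rpow x (1 / g)) g = x.
Proof.
  intros. rewrite rpow_rpow by lra. replace (1 / g * g) with 1 by (field; lra).
  apply rpow_1; lra.
Qed.

Lemma rpow_lower_exponent w W g g1 : 0 <= w <= W -> 0 < W -> 0 < g <= g1 ->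
  rpow w g1 <= rpow W (g1 - g) * rpow w g.
Proof.
  intros Hw HW Hg. destruct (Req_dec w 0) as [->|]; [rewrite !(rpow_nonpos 0); lra|].
  replace g1 with ((g1 - g) + g) at 1 by lra. rewrite rpow_plus by lra.
  apply Rmult_le_compat_r; [apply rpow_ge0|apply rpow_le_compat; lra].
Qed.

Lemma exp_le_mono a b : a <= b -> exp a <= exp b.
Proof. intros [H|H]; [left; now apply exp_increasing|subst; lra]. Qed.

Lemma Rpower_antimono_exponent x a b : 0 < x <= 1 -> a <= b -> Rpower x b <= Rpower x a.
Proof.
  intros Hx Hab. unfold Rpower. apply exp_le_mono.
  assert (ln x <= 0) by (rewrite <- ln_1; apply ln_le; lra). nra.
Qed.

Lemma rpow_le_self x p : 1 <= p -> 0 <= x <= 1 -> rpow x p <= x.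
Proof.
  intros Hp Hx. destruct (Req_dec x 0) as [->|]; [rewrite rpow_nonpos; lra|].
  rewrite rpow_eq_Rpower by lra. rewrite <- (Rpower_1 x) at 2 by lra.
  apply Rpower_antimono_exponent; lra.
Qed.

(* For [0 < q <= 1], [z ^ (q - 1)] is nonincreasing; write [z ^ q = z * z ^ (q - 1)]. *)
Lemma rpow_subadditive x y q : 0 <= x -> 0 <= y -> 0 < q <= 1 ->
  rpow (x + y) q <= rpow x q + rpow y q.
Proof.
  intros Hx Hy Hq.
  destruct (Req_dec x 0) as [->|]; [rewrite Rplus_0_l; pose proof (rpow_ge0 0 q); lra|].
  destruct (Req_dec y 0) as [->|]; [rewrite Rplus_0_r; pose proof (rpow_ge0 0 q); lra|].
  rewrite !rpow_eq_Rpower by lra.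
  assert (E : forall z, 0 < z -> Rpower z q = z * Rpower z (q - 1)).
  { intros z Hz. replace q with (1 + (q - 1)) at 1 by lra. now rewrite Rpower_plus, Rpower_1. }
  assert (M : forall z, 0 < z <= x + y -> Rpower (x + y) (q - 1) <= Rpower z (q - 1)).
  { intros z Hz. unfold Rpower. apply exp_le_mono.
    assert (ln z <= ln (x + y)) by (apply ln_le; lra). nra. }
  rewrite (E (x + y)), (E x), (E y) by lra.
  pose proof (M x ltac:(lra)). pose proof (M y ltac:(lra)). nra.
Qed.

Lemma rpow_diff_le A B E q : 0 <= A -> 0 <= B -> Rabs (A - B) <= E -> 0 < q <= 1 ->
  Rabs (rpow A q - rpow B q) <= rpow E q.
Proof.
  intros HA HB HE Hq. assert (HE0 : 0 <= E) by (pose proof (Rabs_pos (A - B)); lra).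
  apply Rabs_le. apply Rabs_le_between in HE.
  pose proof (rpow_subadditive B E q HB HE0 Hq). pose proof (rpow_subadditive A E q HA HE0 Hq).
  pose proof (rpow_le_compat A (B + E) q ltac:(lra) ltac:(lra)).
  pose proof (rpow_le_compat B (A + E) q ltac:(lra) ltac:(lra)). lra.
Qed.

(* Mean value theorem for [z ^ p] on [y, x], derivative bounded by [p M ^ (p - 1)]. *)
Lemma rpow_lipschitz p x y M : 1 <= p -> 0 <= y <= x -> x <= M ->
  rpow x p - rpow y p <= p * rpow M (p - 1) * (x - y).
Proof.
  intros Hp Hyx HxM. pose proof (rpow_ge0 M (p - 1)).
  destruct (Req_dec x y) as [->|Hxy]; [nra|].
  assert (Hc : forall c, 0 < c <= M -> Rpower c (p - 1) <= rpow M (p - 1)).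
  { intros c Hc. rewrite rpow_eq_Rpower by lra. apply Rle_Rpower_l; lra. }
  destruct (Req_dec y 0) as [->|Hy0].
  - rewrite (rpow_nonpos 0), rpow_eq_Rpower by lra.
    replace (Rpower x p) with (x * Rpower x (p - 1))
      by (replace p with (1 + (p - 1)) at 2 by lra; rewrite Rpower_plus, Rpower_1; lra).
    pose proof (Hc x ltac:(lra)).
    assert (x * Rpower x (p - 1) <= x * rpow M (p - 1)) by (apply Rmult_le_compat_l; lra).
    assert (0 <= (p - 1) * rpow M (p - 1) * x) by (apply Rmult_le_pos; [apply Rmult_le_pos|]; lra).
    nra.
  - assert (0 < y) by lra. rewrite (rpow_eq_Rpower x), (rpow_eq_Rpower y) by lra.
    destruct (MVT_cor2 (fun z => Rpower z p) (fun z => p * Rpower z (p - 1)) y x)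
      as [c [-> Hc']]; [lra|intros c Hc0; apply derivable_pt_lim_power; lra|].
    pose proof (Hc c ltac:(lra)). apply Rmult_le_compat_r; [lra|].
    apply Rmult_le_compat_l; lra.
Qed.

(** * Interval arithmetic *)

Lemma inI_pt x : inI x (pt x).
Proof. unfold inI, pt; simpl; lra. Qed.

Lemma inI_proper x X : inI x X -> proper X.
Proof. unfold inI, proper; lra. Qed.

Lemma inI_subI x X Y : inI x X -> subI X Y -> inI x Y.
Proof. unfold inI, subI; lra. Qed.

Lemma inI_abs_le x X : inI x X -> Rabs x <= Rmax (Rabs (lo X)) (Rabs (hi X)).
Proof. unfold inI, Rabs, Rmax; intros; repeat destruct Rcase_abs; repeat destruct Rle_dec; lra. Qed.

Lemma inI_add a b X Y : inI a X -> inI b Y -> inI (a + b) (iadd X Y).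
Proof. unfold inI, iadd; simpl; lra. Qed.

Lemma mul_between l h a c : l <= a <= h -> Rmin (l * c) (h * c) <= a * c <= Rmax (l * c) (h * c).
Proof.
  intros H. destruct (Rle_dec 0 c); split.
  - eapply Rle_trans; [apply Rmin_l|nra].
  - eapply Rle_trans; [|apply Rmax_r]; nra.
  - eapply Rle_trans; [apply Rmin_r|nra].
  - eapply Rle_trans; [|apply Rmax_l]; nra.
Qed.

Lemma inI_mul a b X Y : inI a X -> inI b Y -> inI (a * b) (imul X Y).
Proof.
  unfold inI; intros HX HY. unfold imul; simpl.
  assert (Hrow : forall u, Rmin (u * lo Y) (u * hi Y) <= u * b <= Rmax (u * lo Y) (u * hi Y)).
  { intros u. rewrite !(Rmult_comm u). now apply mul_between. }
  destruct (mul_between (lo X) (hi X) a b HX).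
  destruct (Hrow (lo X)), (Hrow (hi X)).
  split.
  - eapply Rle_trans; [|eassumption].
    pose proof (Rmin_l (Rmin (lo X * lo Y) (lo X * hi Y)) (Rmin (hi X * lo Y) (hi X * hi Y))).
    pose proof (Rmin_r (Rmin (lo X * lo Y) (lo X * hi Y)) (Rmin (hi X * lo Y) (hi X * hi Y))).
    apply Rmin_glb; lra.
  - eapply Rle_trans; [eassumption|].
    pose proof (Rmax_l (Rmax (lo X * lo Y) (lo X * hi Y)) (Rmax (hi X * lo Y) (hi X * hi Y))).
    pose proof (Rmax_r (Rmax (lo X * lo Y) (lo X * hi Y)) (Rmax (hi X * lo Y) (hi X * hi Y))).
    apply Rmax_lub; lra.
Qed.

Lemma inI_abs a X : inI a X -> inI (Rabs a) (iabs X).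
Proof.
  unfold inI, iabs; simpl. intros H. split.
  - destruct (Rle_dec 0 (lo X)); [rewrite Rabs_right; lra|].
    destruct (Rle_dec (hi X) 0); [rewrite Rabs_left1; lra|apply Rabs_pos].
  - unfold Rabs, Rmax. repeat destruct Rcase_abs; repeat destruct Rle_dec; lra.
Qed.

Lemma inI_pow a X g : 0 <= g -> inI a X -> inI (rpow a g) (ipow X g).
Proof. unfold inI, ipow; simpl. intros Hg H. split; apply rpow_le_compat; lra. Qed.

Lemma inI_sum n f F : (forall j, (j < n)%nat -> inI (f j) (F j)) -> inI (rsum n f) (isum n F).
Proof.
  induction n as [|n IH]; simpl; intros H; [apply inI_pt|].
  apply inI_add; [apply IH; intros|]; apply H; lia.
Qed.

Lemma proper_pt x : proper (pt x).
Proof. exact (inI_proper x _ (inI_pt x)). Qed.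

Lemma proper_add X Y : proper X -> proper Y -> proper (iadd X Y).
Proof. unfold proper, iadd; simpl; lra. Qed.

Lemma proper_mul X Y : proper (imul X Y).
Proof.
  unfold proper, imul; simpl. eapply Rle_trans; [apply Rmin_l|].
  eapply Rle_trans; [apply Rmin_l|]. eapply Rle_trans; [|apply Rmax_l]. apply Rmax_l.
Qed.

Lemma proper_abs X : proper X -> proper (iabs X).
Proof. intros H. apply (inI_proper (Rabs (lo X))), inI_abs. unfold inI, proper in *; lra. Qed.

Lemma proper_pow X g : 0 <= g -> proper X -> proper (ipow X g).
Proof. intros Hg H. unfold proper, ipow; simpl. now apply rpow_le_compat. Qed.

Lemma iabs_lo_ge0 X : 0 <= lo (iabs X).
Proof. unfold iabs; simpl. destruct (Rle_dec 0 (lo X)); auto. destruct (Rle_dec (hi X) 0); lra. Qed.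

Lemma imul_endpoints_attained X Y : proper X -> proper Y ->
  (exists a b, inI a X /\ inI b Y /\ lo (imul X Y) = a * b) /\
  (exists a b, inI a X /\ inI b Y /\ hi (imul X Y) = a * b).
Proof.
  unfold proper; intros HX HY. unfold imul; simpl.
  assert (A1 : inI (lo X) X) by (unfold inI; lra). assert (A2 : inI (hi X) X) by (unfold inI; lra).
  assert (B1 : inI (lo Y) Y) by (unfold inI; lra). assert (B2 : inI (hi Y) Y) by (unfold inI; lra).
  split; [apply Rmin_case; apply Rmin_case|apply Rmax_case; apply Rmax_case]; eauto 10.
Qed.

Lemma subI_refl X : subI X X.
Proof. unfold subI; lra. Qed.

Lemma subI_add X Y X' Y' : subI X X' -> subI Y Y' -> subI (iadd X Y) (iadd X' Y').
Proof. unfold subI, iadd; simpl; lra. Qed.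

Lemma subI_mul X Y X' Y' : proper X -> proper Y -> subI X X' -> subI Y Y' ->
  subI (imul X Y) (imul X' Y').
Proof.
  intros HX HY SX SY. unfold subI.
  destruct (imul_endpoints_attained X Y HX HY) as [[a [b [Ha [Hb ->]]]] [a' [b' [Ha' [Hb' ->]]]]].
  assert (H1 := inI_mul a b X' Y' (inI_subI _ _ _ Ha SX) (inI_subI _ _ _ Hb SY)).
  assert (H2 := inI_mul a' b' X' Y' (inI_subI _ _ _ Ha' SX) (inI_subI _ _ _ Hb' SY)).
  unfold inI, subI in *. lra.
Qed.

Lemma subI_abs X X' : proper X -> subI X X' -> subI (iabs X) (iabs X').
Proof.
  unfold proper, subI, iabs; simpl. intros HX S. split.
  - destruct (Rle_dec 0 (lo X')); destruct (Rle_dec 0 (lo X)); try lra;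
    destruct (Rle_dec (hi X') 0); destruct (Rle_dec (hi X) 0); lra.
  - unfold Rabs, Rmax. repeat destruct Rcase_abs; repeat destruct Rle_dec; lra.
Qed.

Lemma subI_pow X X' g : 0 <= g -> 0 <= lo X' -> subI X X' -> subI (ipow X g) (ipow X' g).
Proof. unfold subI, ipow; simpl; intros. split; apply rpow_le_compat; lra. Qed.

Lemma width_ge0 X : proper X -> 0 <= width X.
Proof. unfold proper, width; lra. Qed.

Lemma width_pt x : width (pt x) = 0.
Proof. unfold width, pt; simpl; ring. Qed.

Lemma width_add X Y : width (iadd X Y) = width X + width Y.
Proof. unfold width, iadd; simpl; ring. Qed.

Lemma width_mul_le X Y MX MY : proper X -> proper Y ->
  (forall x, inI x X -> Rabs x <= MX) -> (forall y, inI y Y -> Rabs y <= MY) ->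
  width (imul X Y) <= MX * width Y + MY * width X.
Proof.
  intros HX HY BX BY. unfold width.
  destruct (imul_endpoints_attained X Y HX HY) as [[a' [b' [Ha' [Hb' ->]]]] [a [b [Ha [Hb ->]]]]].
  replace (a * b - a' * b') with (a * (b - b') + b' * (a - a')) by ring.
  assert (Rabs (b - b') <= hi Y - lo Y) by (apply Rabs_le; unfold inI in *; lra).
  assert (Rabs (a - a') <= hi X - lo X) by (apply Rabs_le; unfold inI in *; lra).
  eapply Rle_trans; [apply Rle_abs|]. eapply Rle_trans; [apply Rabs_triang|].
  rewrite !Rabs_mult. apply Rplus_le_compat; apply Rmult_le_compat; auto using Rabs_pos.
Qed.

Lemma width_abs_le X : proper X -> width (iabs X) <= width X.
Proof.
  unfold proper, width, iabs; simpl. intros H.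
  destruct (Rle_dec 0 (lo X)); [|destruct (Rle_dec (hi X) 0)];
  unfold Rabs, Rmax; repeat destruct Rcase_abs; repeat destruct Rle_dec; lra.
Qed.

Lemma width_pow_le X p M : 1 <= p -> 0 <= lo X -> proper X -> hi X <= M ->
  width (ipow X p) <= p * rpow M (p - 1) * width X.
Proof. unfold proper, width, ipow; simpl; intros. apply rpow_lipschitz; lra. Qed.

(** * Boxes and Hoelder continuous enclosures *)

Lemma rmaxn_ge n f j : (j < n)%nat -> f j <= rmaxn n f.
Proof.
  induction n as [|n IH]; intros H; [lia|]. simpl. destruct (Nat.eq_dec j n) as [->|].
  - apply Rmax_r.
  - eapply Rle_trans; [apply IH; lia|apply Rmax_l].
Qed.

Lemma rmaxn_ge0 n f : 0 <= rmaxn n f.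
Proof. induction n; simpl; [lra|]. eapply Rle_trans; [eassumption|apply Rmax_l]. Qed.

Lemma rmaxn_le n f B : 0 <= B -> (forall j, (j < n)%nat -> f j <= B) -> rmaxn n f <= B.
Proof.
  induction n as [|n IH]; simpl; intros HB H; auto.
  apply Rmax_lub; [apply IH; auto|apply H; lia].
Qed.

Lemma bwidth_ge0 n K : 0 <= bwidth n K.
Proof. apply rmaxn_ge0. Qed.

Lemma width_le_bwidth n K j : (j < n)%nat -> width (K j) <= bwidth n K.
Proof. intros; now apply (rmaxn_ge n (fun j => width (K j))). Qed.

Lemma bwidth_le_sub n K K' : bsub n K K' -> bwidth n K <= bwidth n K'.
Proof.
  intros S. apply rmaxn_le; [apply bwidth_ge0|]. intros j Hj.
  eapply Rle_trans; [|apply (width_le_bwidth n K' j Hj)]. destruct (S j Hj). unfold width; lra.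
Qed.

Lemma bsub_refl n K : bsub n K K.
Proof. intros j _. apply subI_refl. Qed.

Lemma bsub_trans n K1 K2 K3 : bsub n K1 K2 -> bsub n K2 K3 -> bsub n K1 K3.
Proof. unfold bsub, subI; intros A B j Hj. specialize (A j Hj); specialize (B j Hj); lra. Qed.

Lemma binterior_proper n K : binterior n K -> bproper n K.
Proof. intros H j Hj. specialize (H j Hj). unfold proper; lra. Qed.

Lemma bvol_gt0 n K : binterior n K -> 0 < bvol n K.
Proof. intros H. apply rprod_gt0. intros j Hj. specialize (H j Hj). unfold width; lra. Qed.

Lemma bvol_ge0 n K : bproper n K -> 0 <= bvol n K.
Proof. intros H. apply rprod_ge0. intros j Hj. specialize (H j Hj). unfold width, proper in *; lra. Qed.

Lemma bwidth_gt0 n K : (0 < n)%nat -> binterior n K -> 0 < bwidth n K.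
Proof.
  intros Hn HK. eapply Rlt_le_trans; [|apply (width_le_bwidth n K 0 Hn)].
  specialize (HK 0%nat Hn). unfold width; lra.
Qed.

(* Preserved by every interval operation used to build [F_Phi]. *)
Record isotone_holder (n : nat) (Om : box) (Q : box -> Itv) : Prop := {
  ih_proper : forall K, bproper n K -> bsub n K Om -> proper (Q K);
  ih_isotone : forall K K', bproper n K -> bsub n K K' -> bsub n K' Om -> subI (Q K) (Q K');
  ih_holder : exists C g, holder_const n Om Q C g
}.

Section IsotoneHolder.

Variables (n : nat) (Om : box).
Hypothesis HW : 0 < bwidth n Om.

Lemma ih_bound Q : isotone_holder n Om Q ->
  forall K x, bproper n K -> bsub n K Om -> inI x (Q K) ->
  Rabs x <= Rmax (Rabs (lo (Q Om))) (Rabs (hi (Q Om))).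
Proof.
  intros HQ K x HK HKO Hx. apply inI_abs_le. eapply inI_subI; [eassumption|].
  apply HQ; auto. apply bsub_refl.
Qed.

(* Sub-boxes of [Om] have width at most [bwidth n Om], so an exponent can always be lowered. *)
Lemma holder_lower_exponent Q C g1 g : holder_const n Om Q C g1 -> 0 < g <= g1 ->
  holder_const n Om Q (C * rpow (bwidth n Om) (g1 - g)) g.
Proof.
  intros [HC [Hg1 H]] Hg. pose proof (rpow_gt0 _ (g1 - g) HW).
  split; [nra|split; [lra|]]. intros K HK HKO.
  eapply Rle_trans; [now apply H|]. rewrite Rmult_assoc. apply Rmult_le_compat_l; auto.
  apply rpow_lower_exponent; auto. split; [apply bwidth_ge0|now apply bwidth_le_sub].
Qed.

Lemma holder_common_exponent Q1 Q2 : isotone_holder n Om Q1 -> isotone_holder n Om Q2 ->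
  exists C1 C2 g, holder_const n Om Q1 C1 g /\ holder_const n Om Q2 C2 g.
Proof.
  intros [_ _ [C1 [g1 H1]]] [_ _ [C2 [g2 H2]]].
  pose proof (proj1 (proj2 H1)). pose proof (proj1 (proj2 H2)).
  exists (C1 * rpow (bwidth n Om) (g1 - Rmin g1 g2)), (C2 * rpow (bwidth n Om) (g2 - Rmin g1 g2)),
    (Rmin g1 g2).
  split; apply holder_lower_exponent; auto; split; try apply Rmin_glb_lt; auto using Rmin_l, Rmin_r.
Qed.

Lemma ih_const c : isotone_holder n Om (fun _ => pt c).
Proof.
  split; [intros; apply proper_pt|intros; apply subI_refl|].
  exists 0, 1. split; [lra|split; [lra|]]. intros. rewrite width_pt. lra.
Qed.

Lemma ih_coord j : (j < n)%nat -> isotone_holder n Om (fun K => K j).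
Proof.
  intros Hj. split; [intros K HK _; now apply HK|intros K K' _ S _; now apply S|].
  exists 1, 1. split; [lra|split; [lra|]]. intros K HK _.
  rewrite rpow_1, Rmult_1_l by apply bwidth_ge0. now apply width_le_bwidth.
Qed.

Lemma ih_add Q1 Q2 : isotone_holder n Om Q1 -> isotone_holder n Om Q2 ->
  isotone_holder n Om (fun K => iadd (Q1 K) (Q2 K)).
Proof.
  intros G1 G2. destruct (holder_common_exponent Q1 Q2 G1 G2) as [C1 [C2 [g [[HC1 [Hg H1]] [HC2 [_ H2]]]]]].
  split; [intros; apply proper_add; [apply G1|apply G2]; auto
         |intros; apply subI_add; [apply G1|apply G2]; auto|].
  exists (C1 + C2), g. split; [lra|split; [lra|]]. intros K HK HKO.
  rewrite width_add. specialize (H1 K HK HKO). specialize (H2 K HK HKO). lra.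
Qed.

Lemma ih_mul Q1 Q2 : isotone_holder n Om Q1 -> isotone_holder n Om Q2 ->
  isotone_holder n Om (fun K => imul (Q1 K) (Q2 K)).
Proof.
  intros G1 G2. destruct (holder_common_exponent Q1 Q2 G1 G2) as [C1 [C2 [g [[HC1 [Hg H1]] [HC2 [_ H2]]]]]].
  set (M1 := Rmax (Rabs (lo (Q1 Om))) (Rabs (hi (Q1 Om)))).
  set (M2 := Rmax (Rabs (lo (Q2 Om))) (Rabs (hi (Q2 Om)))).
  assert (HM1 : 0 <= M1) by (eapply Rle_trans; [apply Rabs_pos|apply Rmax_l]).
  assert (HM2 : 0 <= M2) by (eapply Rle_trans; [apply Rabs_pos|apply Rmax_l]).
  split; [intros; apply proper_mul|intros K K' HK S HK'|].
  { apply subI_mul; [apply G1|apply G2|apply G1|apply G2]; eauto using bsub_trans. }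
  exists (M1 * C2 + M2 * C1), g. split; [nra|split; [lra|]]. intros K HK HKO.
  apply Rle_trans with (M1 * width (Q2 K) + M2 * width (Q1 K)).
  { apply width_mul_le; [apply G1|apply G2|intros; apply (ih_bound Q1 G1 K)|intros; apply (ih_bound Q2 G2 K)]; auto. }
  specialize (H1 K HK HKO). specialize (H2 K HK HKO).
  pose proof (Rmult_le_compat_l M1 _ _ HM1 H2). pose proof (Rmult_le_compat_l M2 _ _ HM2 H1). nra.
Qed.

Lemma ih_sum m F : (forall j, (j < m)%nat -> isotone_holder n Om (F j)) ->
  isotone_holder n Om (fun K => isum m (fun j => F j K)).
Proof.
  induction m as [|m IH]; intros H; simpl; [apply ih_const|].
  apply (ih_add (fun K => isum m (fun j => F j K))); [apply IH; intros|]; apply H; lia.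
Qed.

Lemma ih_powabs Q p : 1 <= p -> isotone_holder n Om Q ->
  isotone_holder n Om (fun K => ipow (iabs (Q K)) p).
Proof.
  intros Hp [P1 I1 [C1 [g1 [HC1 [Hg1 H1]]]]].
  assert (HA : forall K, bproper n K -> bsub n K Om -> proper (iabs (Q K))) by auto using proper_abs.
  split; [intros; apply proper_pow; auto; lra|intros K K' HK S HK'|].
  { apply subI_pow; [lra|apply iabs_lo_ge0|]. apply subI_abs; eauto using bsub_trans. }
  set (M := hi (iabs (Q Om))). pose proof (rpow_ge0 M (p - 1)).
  exists (p * rpow M (p - 1) * C1), g1. split; [apply Rmult_le_pos; nra|split; [lra|]].
  intros K HK HKO. eapply Rle_trans.
  { apply (width_pow_le _ _ M); [lra|apply iabs_lo_ge0|auto|].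
    apply (subI_abs (Q K) (Q Om)); auto using bsub_refl. }
  rewrite (Rmult_assoc (p * rpow M (p - 1)) C1). apply Rmult_le_compat_l; [nra|].
  eapply Rle_trans; [apply width_abs_le|]; auto.
Qed.

Lemma ih_comp Q s Sg : enclosure_IR s Sg -> holder_IR Sg -> isotone_holder n Om Q ->
  isotone_holder n Om (fun K => Sg (Q K)).
Proof.
  intros [IS ES] [CS [gS [HCS [HgS HS]]]] [P1 I1 [C1 [g1 [HC1 [Hg1 H1]]]]].
  assert (PS : forall X, proper X -> proper (Sg X)).
  { intros X HX. apply (inI_proper (s (lo X))), ES; auto. unfold inI, proper in *; lra. }
  split; [auto|intros; apply IS; eauto using bsub_trans|].
  exists (CS * rpow C1 gS), (g1 * gS). pose proof (rpow_ge0 C1 gS).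
  split; [nra|split; [nra|]]. intros K HK HKO.
  eapply Rle_trans; [apply HS; auto|].
  assert (rpow (width (Q K)) gS <= rpow C1 gS * rpow (bwidth n K) (g1 * gS)).
  { rewrite <- rpow_rpow, <- rpow_mult_distr by (auto using rpow_ge0, bwidth_ge0).
    apply rpow_le_compat; auto; lra. }
  rewrite Rmult_assoc. apply Rmult_le_compat_l; lra.
Qed.

Definition ih_mx (n : nat) (Om : box) (M : box -> nat -> nat -> Itv) : Prop :=
  forall a b, isotone_holder n Om (fun K => M K a b).

Lemma ih_mx_const M : ih_mx n Om (fun _ => fun a b => pt (M a b)).
Proof. intros a b. apply ih_const. Qed.

Lemma ih_mx_add A B : ih_mx n Om A -> ih_mx n Om B -> ih_mx n Om (fun K => imxadd (A K) (B K)).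
Proof. intros HA HB a b. now apply ih_add. Qed.

Lemma ih_mx_mul m A B : ih_mx n Om A -> ih_mx n Om B -> ih_mx n Om (fun K => imxmul m (A K) (B K)).
Proof. intros HA HB a b. apply (ih_sum m (fun l K => imul (A K a l) (B K l b))). intros. now apply ih_mul. Qed.

Lemma ih_mx_diag v : (forall l, isotone_holder n Om (fun K => v K l)) ->
  ih_mx n Om (fun K => idiag (v K)).
Proof. intros H a b. unfold idiag. destruct (Nat.eqb a b); [apply H|apply ih_const]. Qed.

End IsotoneHolder.

Section NetworkEnclosureHolder.

Variables (N : Net) (Om : box) (s s' s'' : R -> R) (Sg Sg1 Sg2 : Itv -> Itv).
Hypothesis HW : 0 < bwidth (nd N 0) Om.
Hypotheses (E0 : enclosure_IR s Sg) (E1 : enclosure_IR s' Sg1) (E2 : enclosure_IR s'' Sg2).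
Hypotheses (H0 : holder_IR Sg) (H1 : holder_IR Sg1) (H2 : holder_IR Sg2).

Lemma ih_izstep k X : (forall j, (j < nd N k)%nat -> isotone_holder (nd N 0) Om (fun K => X K j)) ->
  forall i, isotone_holder (nd N 0) Om (fun K => izstep N k (X K) i).
Proof.
  intros HX i. unfold izstep.
  apply (ih_add _ _ HW (fun K => isum _ _) (fun _ => pt _)); [|apply ih_const].
  apply (ih_sum _ _ HW _ (fun j K => imul (pt (nW N k i j)) (X K j))).
  intros j Hj. apply ih_mul; auto using ih_const.
Qed.

Lemma ih_iX k i : (i < nd N k)%nat -> isotone_holder (nd N 0) Om (fun K => iX N Sg k K i).
Proof.
  revert i. induction k as [|k IH]; intros i Hi; simpl; [now apply ih_coord|].
  apply (ih_comp _ _ (fun K => izstep N k (iX N Sg k K) i) s); auto.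
  now apply ih_izstep.
Qed.

Lemma ih_Fval k i : isotone_holder (nd N 0) Om (fun K => Fval N Sg (k + 1) K i).
Proof.
  replace (k + 1)%nat with (S k) by lia. simpl.
  apply (ih_izstep k (fun K => iX N Sg k K)). intros. now apply ih_iX.
Qed.

Lemma ih_mx_Sg_Fval Sg' s0 k : enclosure_IR s0 Sg' -> holder_IR Sg' ->
  ih_mx (nd N 0) Om (fun K => idiag (fun l => Sg' (Fval N Sg (k + 1) K l))).
Proof.
  intros E H. apply ih_mx_diag. intros l.
  apply (ih_comp _ _ (fun K => Fval N Sg (k + 1) K l) s0); auto using ih_Fval.
Qed.

Lemma ih_jac_aux m : ih_mx (nd N 0) Om (fun K => jac_aux N Sg Sg1 K m).
Proof.
  induction m as [|m IH]; simpl; unfold ptm; [apply ih_mx_const|].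
  repeat apply ih_mx_mul; auto using ih_mx_const.
  now apply (ih_mx_Sg_Fval _ s').
Qed.

Lemma ih_hess_aux i m : ih_mx (nd N 0) Om (fun K => hess_aux N Sg Sg1 Sg2 K i m).
Proof.
  induction m as [|m IH]; simpl; unfold ptm, ptmT; [apply ih_mx_const|].
  apply ih_mx_add; repeat apply ih_mx_mul; auto using ih_mx_const;
    try now apply (ih_mx_Sg_Fval _ s').
  apply ih_mx_diag. intros l. apply ih_mul; auto.
  - apply (ih_comp _ _ (fun K => Fval N Sg _ K l) s''); auto using ih_Fval.
  - apply ih_jac_aux.
Qed.

Lemma ih_F_Phi p : 1 <= p -> isotone_holder (nd N 0) Om (F_Phi N Sg Sg1 Sg2 p).
Proof.
  intros Hp. unfold F_Phi.
  apply (ih_sum _ _ HW _ (fun i K => iadd (iadd _ _) _)). intros i _.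
  repeat apply ih_add; auto.
  - apply (ih_powabs _ _ (fun K => Fval N Sg (nL N + 1) K i)); auto using ih_Fval.
  - apply (ih_sum _ _ HW _ (fun j K => ipow (iabs (Jac N Sg Sg1 0 K i j)) p)). intros j _.
    apply (ih_powabs _ _ (fun K => Jac N Sg Sg1 0 K i j)); auto. apply ih_jac_aux.
  - apply (ih_sum _ _ HW _ (fun j K => isum _ (fun t => ipow (iabs (Hess N Sg Sg1 Sg2 i 0 K j (j + t))) p))).
    intros j _. apply (ih_sum _ _ HW _ (fun t K => ipow (iabs (Hess N Sg Sg1 Sg2 i 0 K j (j + t))) p)).
    intros t _. apply (ih_powabs _ _ (fun K => Hess N Sg Sg1 Sg2 i 0 K j (j + t))); auto.
    apply ih_hess_aux.
Qed.

End NetworkEnclosureHolder.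

(** * Derivatives of the network *)

Lemma is_derive_Rplus (f g : R -> R) x a b :
  is_derive f x a -> is_derive g x b -> is_derive (fun t => f t + g t) x (a + b).
Proof. intros. now apply (is_derive_plus f g). Qed.

Lemma is_derive_Rmult (f g : R -> R) x a b :
  is_derive f x a -> is_derive g x b -> is_derive (fun t => f t * g t) x (a * g x + f x * b).
Proof. intros. apply (is_derive_mult f g); auto. apply Rmult_comm. Qed.

Lemma is_derive_Rcomp (f g : R -> R) x a b :
  is_derive f (g x) a -> is_derive g x b -> is_derive (fun t => f (g t)) x (b * a).
Proof. intros. now apply (is_derive_comp f g). Qed.

Lemma is_derive_Rconst (c x : R) : is_derive (fun _ : R => c) x 0.
Proof. apply (is_derive_const c x). Qed.

Lemma is_derive_Rid (x : R) : is_derive (fun t : R => t) x 1.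
Proof. apply (is_derive_id x). Qed.

Lemma is_derive_rsum n (f : nat -> R -> R) df x :
  (forall j, (j < n)%nat -> is_derive (f j) x (df j)) ->
  is_derive (fun t => rsum n (fun j => f j t)) x (rsum n df).
Proof.
  induction n as [|n IH]; simpl; intros H; [apply is_derive_Rconst|].
  apply is_derive_Rplus; [apply IH; intros|]; apply H; lia.
Qed.

Lemma upd_eq {A} (x : nat -> A) j a : upd x j a j = a.
Proof. unfold upd. now rewrite Nat.eqb_refl. Qed.

Lemma upd_neq {A} (x : nat -> A) j a m : m <> j -> upd x j a m = x m.
Proof. intros H. unfold upd. now destruct (Nat.eqb_spec m j). Qed.

Lemma upd_same (x : nat -> R) j : upd x j (x j) = x.
Proof.
  apply functional_extensionality. intros m. unfold upd.
  destruct (Nat.eqb_spec m j); subst; auto.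
Qed.

(* [zval N s l u] is [z^(l+1)] of the network at input [u]; [dxval]/[dzval] are the forward-mode
   derivatives of [x^(l)]/[z^(l+1)] in the direction [e_c], [ddxval]/[ddzval] those in [e_c, e_e]. *)
Definition zval (N : Net) (s : R -> R) (l : nat) (u : nat -> R) (i : nat) : R :=
  rsum (nd N l) (fun m => nW N l i m * xval N s l u m) + nb N l i.

Fixpoint dxval (N : Net) (s s' : R -> R) (c l : nat) (u : nat -> R) : nat -> R :=
  match l with
  | O => fun m => if Nat.eqb m c then 1 else 0
  | S k => fun i => s' (zval N s k u i) * rsum (nd N k) (fun m => nW N k i m * dxval N s s' c k u m)
  end.

Definition dzval N s s' c l u i := rsum (nd N l) (fun m => nW N l i m * dxval N s s' c l u m).

Fixpoint ddxval (N : Net) (s s' s'' : R -> R) (c e l : nat) (u : nat -> R) : nat -> R :=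
  match l with
  | O => fun _ => 0
  | S k => fun i => s'' (zval N s k u i) * dzval N s s' c k u i * dzval N s s' e k u i
                    + s' (zval N s k u i) * rsum (nd N k) (fun m => nW N k i m * ddxval N s s' s'' c e k u m)
  end.

Definition ddzval N s s' s'' c e l u i :=
  rsum (nd N l) (fun m => nW N l i m * ddxval N s s' s'' c e l u m).

Section ForwardDerivatives.

Variables (N : Net) (s s' s'' : R -> R).
Hypotheses (Hs : forall x, is_derive s x (s' x)) (Hs' : forall x, is_derive s' x (s'' x)).

Lemma is_derive_zval_of_xval c y l :
  (forall m t0, is_derive (fun t => xval N s l (upd y c t) m) t0 (dxval N s s' c l (upd y c t0) m)) ->
  forall m t0, is_derive (fun t => zval N s l (upd y c t) m) t0 (dzval N s s' c l (upd y c t0) m).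
Proof.
  intros IH m t0. unfold zval, dzval. rewrite <- Rplus_0_r.
  apply is_derive_Rplus; [|apply is_derive_Rconst].
  apply is_derive_rsum. intros j _. apply is_derive_scal, IH.
Qed.

Lemma is_derive_xval c y l : forall m t0,
  is_derive (fun t => xval N s l (upd y c t) m) t0 (dxval N s s' c l (upd y c t0) m).
Proof.
  induction l as [|l IH]; intros m t0.
  - simpl. unfold upd. destruct (Nat.eqb m c); [apply is_derive_Rid|apply is_derive_Rconst].
  - change (is_derive (fun t => s (zval N s l (upd y c t) m)) t0
      (s' (zval N s l (upd y c t0) m) * dzval N s s' c l (upd y c t0) m)).
    rewrite Rmult_comm. apply (is_derive_Rcomp s); [apply Hs|]. now apply is_derive_zval_of_xval.
Qed.

Lemma is_derive_zval c y l m t0 :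
  is_derive (fun t => zval N s l (upd y c t) m) t0 (dzval N s s' c l (upd y c t0) m).
Proof. apply is_derive_zval_of_xval, is_derive_xval. Qed.

Lemma is_derive_dzval_of_dxval c e y l :
  (forall m t0, is_derive (fun t => dxval N s s' c l (upd y e t) m) t0
                  (ddxval N s s' s'' c e l (upd y e t0) m)) ->
  forall m t0, is_derive (fun t => dzval N s s' c l (upd y e t) m) t0
                 (ddzval N s s' s'' c e l (upd y e t0) m).
Proof. intros IH m t0. apply is_derive_rsum. intros j _. apply is_derive_scal, IH. Qed.

Lemma is_derive_dxval c e y l : forall m t0,
  is_derive (fun t => dxval N s s' c l (upd y e t) m) t0 (ddxval N s s' s'' c e l (upd y e t0) m).
Proof.
  induction l as [|l IH]; intros m t0; [simpl; apply is_derive_Rconst|].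
  change (is_derive (fun t => s' (zval N s l (upd y e t) m) * dzval N s s' c l (upd y e t) m) t0
    (s'' (zval N s l (upd y e t0) m) * dzval N s s' c l (upd y e t0) m * dzval N s s' e l (upd y e t0) m
     + s' (zval N s l (upd y e t0) m) * ddzval N s s' s'' c e l (upd y e t0) m)).
  replace (s'' _ * _ * _) with
    (dzval N s s' e l (upd y e t0) m * s'' (zval N s l (upd y e t0) m) * dzval N s s' c l (upd y e t0) m)
    by ring.
  apply (is_derive_Rmult (fun t => s' (zval N s l (upd y e t) m))
                         (fun t => dzval N s s' c l (upd y e t) m)).
  - apply (is_derive_Rcomp s'); [apply Hs'|apply is_derive_zval].
  - now apply is_derive_dzval_of_dxval.
Qed.

Lemma is_derive_dzval c e y l m t0 :
  is_derive (fun t => dzval N s s' c l (upd y e t) m) t0 (ddzval N s s' s'' c e l (upd y e t0) m).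
Proof. apply is_derive_dzval_of_dxval, is_derive_dxval. Qed.

Lemma pd_Phi_eq c i : pd c (Phi N s i) = fun y => dzval N s s' c (nL N) y i.
Proof.
  apply functional_extensionality. intros y. unfold pd.
  apply is_derive_unique. rewrite <- (upd_same y c) at 2. apply is_derive_zval.
Qed.

Lemma pd_pd_Phi_eq c e i : pd e (pd c (Phi N s i)) = fun y => ddzval N s s' s'' c e (nL N) y i.
Proof.
  rewrite pd_Phi_eq. apply functional_extensionality. intros y. unfold pd.
  apply is_derive_unique. rewrite <- (upd_same y e) at 2. apply is_derive_dzval.
Qed.

End ForwardDerivatives.

Definition rmxmul (n : nat) (A B : nat -> nat -> R) : nat -> nat -> R :=
  fun i j => rsum n (fun l => A i l * B l j).
Definition rdiag (v : nat -> R) : nat -> nat -> R := fun i j => if Nat.eqb i j then v i else 0.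
Definition rT (M : nat -> nat -> R) : nat -> nat -> R := fun i j => M j i.
Definition rmxv (n : nat) (M : nat -> nat -> R) (x : nat -> R) : nat -> R :=
  fun i => rsum n (fun a => M i a * x a).
Definition qform (n : nat) (x : nat -> R) (H : nat -> nat -> R) (y : nat -> R) : R :=
  rsum n (fun a => rsum n (fun b => x a * H a b * y b)).

(* The real-valued counterparts of [jac_aux] and [hess_aux]: same recursions, point evaluations. *)
Fixpoint jac_real (N : Net) (s s' : R -> R) (u : nat -> R) (m : nat) : nat -> nat -> R :=
  match m with
  | O => nW N (nL N)
  | S m' => let k := (nL N - S m')%nat in
      rmxmul (nd N (k + 1))
        (rmxmul (nd N (k + 1)) (jac_real N s s' u m') (rdiag (fun l => s' (zval N s k u l)))) (nW N k)
  end.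

Fixpoint hess_real (N : Net) (s s' s'' : R -> R) (u : nat -> R) (i m : nat) : nat -> nat -> R :=
  match m with
  | O => fun _ _ => 0
  | S m' => let k := (nL N - S m')%nat in let n1 := nd N (k + 1) in
      let D := rdiag (fun l => s' (zval N s k u l)) in
      fun a b =>
      rmxmul n1 (rmxmul n1 (rmxmul n1 (rmxmul n1 (rT (nW N k)) D) (hess_real N s s' s'' u i m')) D)
        (nW N k) a b
      + rmxmul n1 (rmxmul n1 (rT (nW N k)) (rdiag (fun l => s'' (zval N s k u l) * jac_real N s s' u m' i l)))
          (nW N k) a b
  end.

Lemma rmxmul_diag_r n A v i b : (b < n)%nat -> rmxmul n A (rdiag v) i b = A i b * v b.
Proof.
  intros Hb. unfold rmxmul, rdiag. rewrite <- (rsum_delta n b (fun c => A i c * v c) Hb).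
  apply rsum_ext. intros j _. destruct (Nat.eqb j b); ring.
Qed.

Lemma qform_add n x y A B :
  qform n x (fun a b => A a b + B a b) y = qform n x A y + qform n x B y.
Proof.
  unfold qform. rewrite <- rsum_add. apply rsum_ext. intros a _.
  rewrite <- rsum_add. apply rsum_ext. intros; ring.
Qed.

Lemma qform_congruence m n x y P Q H :
  qform m x (fun a b => rsum n (fun c1 => rsum n (fun c3 => P c3 a * H c3 c1) * Q c1 b)) y
  = qform n (rmxv m P x) H (rmxv m Q y).
Proof.
  unfold qform, rmxv.
  transitivity (rsum m (fun a => rsum m (fun b =>
    rsum n (fun c3 => rsum n (fun c1 => x a * P c3 a * H c3 c1 * Q c1 b * y b))))).
  { apply rsum_ext; intros a _. apply rsum_ext; intros b _.
    rewrite <- rsum_mull, <- rsum_mulr, <- rsum_comm. apply rsum_ext; intros c1 _.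
    rewrite <- rsum_mulr, <- rsum_mull, <- rsum_mulr. apply rsum_ext; intros; ring. }
  transitivity (rsum n (fun c3 => rsum n (fun c1 => rsum m (fun a => rsum m (fun b =>
    x a * P c3 a * H c3 c1 * Q c1 b * y b))))).
  { transitivity (rsum m (fun a => rsum n (fun c3 => rsum n (fun c1 => rsum m (fun b =>
      x a * P c3 a * H c3 c1 * Q c1 b * y b))))).
    - apply rsum_ext; intros a _. rewrite rsum_comm. apply rsum_ext; intros c3 _. apply rsum_comm.
    - rewrite rsum_comm. apply rsum_ext; intros c3 _. apply rsum_comm. }
  apply rsum_ext; intros c3 _. apply rsum_ext; intros c1 _.
  rewrite <- rsum_mulr, rsum_mul_rsum. apply rsum_ext; intros a _. apply rsum_ext; intros b _. ring.
Qed.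

Lemma qform_diag_congruence m n x y P Q q :
  qform m x (fun a b => rsum n (fun c => P c a * q c * Q c b)) y
  = rsum n (fun c => q c * rmxv m P x c * rmxv m Q y c).
Proof.
  unfold qform, rmxv.
  transitivity (rsum m (fun a => rsum n (fun c => rsum m (fun b => x a * P c a * q c * Q c b * y b)))).
  { apply rsum_ext; intros a _. rewrite <- rsum_comm. apply rsum_ext; intros b _.
    rewrite <- rsum_mull, <- rsum_mulr. apply rsum_ext; intros; ring. }
  rewrite rsum_comm. apply rsum_ext; intros c _.
  rewrite Rmult_assoc, rsum_mul_rsum, <- rsum_mull. apply rsum_ext; intros a _.
  rewrite <- rsum_mull. apply rsum_ext; intros; ring.
Qed.

Section BackwardDerivatives.

Variables (N : Net) (s s' s'' : R -> R) (u : nat -> R).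

Let k m := (nL N - S m)%nat.
Let v m l := s' (zval N s (k m) u l).

Lemma jac_real_S_dot m i w :
  rsum (nd N (k m)) (fun a => jac_real N s s' u (S m) i a * w a)
  = rsum (nd N (k m + 1)) (fun c => jac_real N s s' u m i c * v m c * rmxv (nd N (k m)) (nW N (k m)) w c).
Proof.
  simpl jac_real. fold (k m). unfold rmxmul at 1, rmxv.
  transitivity (rsum (nd N (k m)) (fun a => rsum (nd N (k m + 1))
    (fun c => jac_real N s s' u m i c * v m c * (nW N (k m) c a * w a)))).
  { apply rsum_ext; intros a _. rewrite <- rsum_mulr. apply rsum_ext; intros c Hc.
    fold (rmxmul (nd N (k m + 1)) (jac_real N s s' u m) (rdiag (v m)) i c).
    rewrite rmxmul_diag_r by auto. unfold v. ring. }
  rewrite rsum_comm. apply rsum_ext; intros c _. now rewrite <- rsum_mull.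
Qed.

Lemma hess_real_S_qform i m x y :
  qform (nd N (k m)) x (hess_real N s s' s'' u i (S m)) y
  = qform (nd N (k m + 1)) (fun c => v m c * rmxv (nd N (k m)) (nW N (k m)) x c)
      (hess_real N s s' s'' u i m) (fun c => v m c * rmxv (nd N (k m)) (nW N (k m)) y c)
  + rsum (nd N (k m + 1)) (fun c => s'' (zval N s (k m) u c) * jac_real N s s' u m i c
      * rmxv (nd N (k m)) (nW N (k m)) x c * rmxv (nd N (k m)) (nW N (k m)) y c).
Proof.
  set (n1 := nd N (k m + 1)). set (W := nW N (k m)). set (H := hess_real N s s' s'' u i m).
  set (q := fun l => s'' (zval N s (k m) u l) * jac_real N s s' u m i l).
  transitivity (qform (nd N (k m)) x (fun a b =>
      rsum n1 (fun c1 => rsum n1 (fun c3 => (W c3 a * v m c3) * H c3 c1) * (v m c1 * W c1 b))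
    + rsum n1 (fun c => W c a * q c * W c b)) y).
  { unfold qform. apply rsum_ext; intros a _. apply rsum_ext; intros b _. do 2 f_equal.
    simpl hess_real. fold (k m). fold n1 W H. f_equal.
    - unfold rmxmul at 1. apply rsum_ext. intros c1 Hc1.
      fold (rmxmul n1 (rmxmul n1 (rmxmul n1 (rT W) (rdiag (v m))) H) (rdiag (v m)) a c1).
      rewrite rmxmul_diag_r, Rmult_assoc by auto. f_equal. unfold rmxmul at 1.
      apply rsum_ext. intros c3 Hc3. fold (rmxmul n1 (rT W) (rdiag (v m)) a c3).
      now rewrite rmxmul_diag_r.
    - unfold rmxmul at 1. apply rsum_ext. intros c Hc. fold (rmxmul n1 (rT W) (rdiag q) a c).
      now rewrite rmxmul_diag_r. }
  rewrite qform_add, qform_congruence, qform_diag_congruence. f_equal.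
  f_equal; apply functional_extensionality; intros c; unfold rmxv;
    rewrite <- rsum_mull; apply rsum_ext; intros; ring.
Qed.

End BackwardDerivatives.

Section ChainRule.

Variables (N : Net) (s s' s'' : R -> R) (u : nat -> R).

(* Contracting the backward Jacobian at layer [L - m] with the forward derivatives there does not
   depend on [m]; at [m = L] it is the partial derivative, at [m = 0] it is [dzval]. *)
Lemma jac_real_chain c i : forall m, (m <= nL N)%nat ->
  rsum (nd N (nL N - m)) (fun a => jac_real N s s' u m i a * dxval N s s' c (nL N - m) u a)
  = dzval N s s' c (nL N) u i.
Proof.
  induction m as [|m IH]; intros Hm; [now rewrite Nat.sub_0_r|].
  rewrite <- IH, jac_real_S_dot by lia.
  replace (nL N - m)%nat with (S (nL N - S m)) by lia.
  replace (nL N - S m + 1)%nat with (S (nL N - S m)) by lia.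
  apply rsum_ext. intros a _. simpl. unfold rmxv. ring.
Qed.

Lemma hess_real_chain c e i : forall m, (m <= nL N)%nat ->
  qform (nd N (nL N - m)) (dxval N s s' c (nL N - m) u) (hess_real N s s' s'' u i m)
    (dxval N s s' e (nL N - m) u)
  + rsum (nd N (nL N - m)) (fun a => jac_real N s s' u m i a * ddxval N s s' s'' c e (nL N - m) u a)
  = ddzval N s s' s'' c e (nL N) u i.
Proof.
  induction m as [|m IH]; intros Hm.
  - rewrite Nat.sub_0_r. unfold qform, ddzval. simpl.
    rewrite (rsum_ext _ _ (fun _ => 0)), rsum_const0; [ring|].
    intros a _. rewrite (rsum_ext _ _ (fun _ => 0)); [apply rsum_const0|intros; ring].
  - rewrite <- IH, hess_real_S_qform, jac_real_S_dot by lia.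
    replace (nL N - m)%nat with (S (nL N - S m)) by lia.
    replace (nL N - S m + 1)%nat with (S (nL N - S m)) by lia.
    rewrite Rplus_assoc, <- rsum_add. f_equal.
    apply rsum_ext. intros a _. simpl. unfold rmxv, dzval. ring.
Qed.

Lemma pd_Phi_jac_real (Hs : forall x, is_derive s x (s' x)) i j :
  (j < nd N 0)%nat -> pd j (Phi N s i) u = jac_real N s s' u (nL N) i j.
Proof.
  intros Hj. rewrite (pd_Phi_eq N s s' Hs), <- (jac_real_chain j i (nL N)), Nat.sub_diag by lia.
  now apply rsum_mul_delta.
Qed.

Lemma pd_pd_Phi_hess_real (Hs : forall x, is_derive s x (s' x)) (Hs' : forall x, is_derive s' x (s'' x))
  i j k : (j < nd N 0)%nat -> (k < nd N 0)%nat ->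
  pd k (pd j (Phi N s i)) u = hess_real N s s' s'' u i (nL N) j k.
Proof.
  intros Hj Hk. rewrite (pd_pd_Phi_eq N s s' s'' Hs Hs'), <- (hess_real_chain j k i (nL N)), Nat.sub_diag
    by lia.
  simpl. rewrite (rsum_ext _ _ (fun _ => 0)), rsum_const0, Rplus_0_r by (intros; ring).
  unfold qform. set (H := hess_real N s s' s'' u i (nL N)).
  rewrite <- (rsum_mul_delta (nd N 0) j (fun a => H a k)) by auto.
  apply rsum_ext. intros a _. rewrite <- (rsum_mul_delta (nd N 0) k (H a)), <- rsum_mulr by auto.
  apply rsum_ext. intros b _. destruct (Nat.eqb a j); ring.
Qed.

End ChainRule.

(** * Enclosure of the network and of its derivatives *)

Lemma inI_enclosure s Sg x X : enclosure_IR s Sg -> inI x X -> inI (s x) (Sg X).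
Proof. intros [_ H] Hx. apply H; auto. eapply inI_proper; eauto. Qed.

Lemma inI_rmxmul n A B A' B' i j : (forall i l, inI (A i l) (A' i l)) -> (forall l j, inI (B l j) (B' l j)) ->
  inI (rmxmul n A B i j) (imxmul n A' B' i j).
Proof. intros HA HB. apply inI_sum. intros; apply inI_mul; auto. Qed.

Lemma inI_rdiag v V i j : (forall l, inI (v l) (V l)) -> inI (rdiag v i j) (idiag V i j).
Proof. intros H. unfold rdiag, idiag. destruct (Nat.eqb i j); auto using inI_pt. Qed.

Section NetworkEnclosure.

Variables (N : Net) (s s' s'' : R -> R) (Sg Sg1 Sg2 : Itv -> Itv) (u : nat -> R) (K : box).
Hypotheses (E0 : enclosure_IR s Sg) (E1 : enclosure_IR s' Sg1) (E2 : enclosure_IR s'' Sg2).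
Hypothesis Hu : inbox (nd N 0) u K.

Lemma xval_in_iX k i : (i < nd N k)%nat -> inI (xval N s k u i) (iX N Sg k K i).
Proof.
  revert i. induction k as [|k IH]; intros i Hi; simpl; [now apply Hu|].
  apply (inI_enclosure s Sg); auto. apply inI_add; [|apply inI_pt].
  apply inI_sum. intros j Hj. apply inI_mul; [apply inI_pt|auto].
Qed.

Lemma zval_in_Fval k i : inI (zval N s k u i) (Fval N Sg (k + 1) K i).
Proof.
  replace (k + 1)%nat with (S k) by lia. apply inI_add; [|apply inI_pt].
  apply inI_sum. intros j Hj. apply inI_mul; [apply inI_pt|now apply xval_in_iX].
Qed.

Lemma jac_real_in_jac_aux m i a : inI (jac_real N s s' u m i a) (jac_aux N Sg Sg1 K m i a).
Proof.
  revert i a. induction m as [|m IH]; intros i a; simpl; [apply inI_pt|].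
  apply inI_rmxmul; [|intros; apply inI_pt]. intros. apply inI_rmxmul; auto.
  intros. apply inI_rdiag. intros. apply (inI_enclosure s' Sg1); auto using zval_in_Fval.
Qed.

Lemma hess_real_in_hess_aux i m a b : inI (hess_real N s s' s'' u i m a b) (hess_aux N Sg Sg1 Sg2 K i m a b).
Proof.
  revert a b. induction m as [|m IH]; intros a b; simpl; [apply inI_pt|].
  assert (HD : forall l j, inI (rdiag (fun l => s' (zval N s (nL N - S m) u l)) l j)
                 (idiag (fun l => Sg1 (Fval N Sg (nL N - S m + 1) K l)) l j)).
  { intros. apply inI_rdiag. intros. apply (inI_enclosure s' Sg1); auto using zval_in_Fval. }
  apply inI_add; apply inI_rmxmul; intros; auto using inI_pt.
  - repeat (apply inI_rmxmul; intros); auto using inI_pt.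
  - apply inI_rmxmul; intros; [apply inI_pt|]. apply inI_rdiag. intros.
    apply inI_mul; [|apply jac_real_in_jac_aux].
    apply (inI_enclosure s'' Sg2); auto using zval_in_Fval.
Qed.

End NetworkEnclosure.

Lemma f_Phi_in_F_Phi N s s' s'' Sg Sg1 Sg2 p K x : 0 <= p ->
  (forall x, is_derive s x (s' x)) -> (forall x, is_derive s' x (s'' x)) ->
  enclosure_IR s Sg -> enclosure_IR s' Sg1 -> enclosure_IR s'' Sg2 ->
  inbox (nd N 0) x K -> inI (f_Phi N s p x) (F_Phi N Sg Sg1 Sg2 p K).
Proof.
  intros Hp Hs Hs' E0 E1 E2 Hx. apply inI_sum. intros i _.
  apply inI_add; [apply inI_add|].
  - apply inI_pow, inI_abs; auto. now apply (zval_in_Fval N s Sg x).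
  - apply inI_sum. intros j Hj. apply inI_pow, inI_abs; auto.
    rewrite (pd_Phi_jac_real N s s') by auto. unfold Jac. rewrite Nat.sub_0_r.
    now apply jac_real_in_jac_aux.
  - apply inI_sum. intros j Hj. apply inI_sum. intros t Ht. apply inI_pow, inI_abs; auto.
    rewrite (pd_pd_Phi_hess_real N s s' s'') by (auto; lia). unfold Hess. rewrite Nat.sub_0_r.
    now apply hess_real_in_hess_aux.
Qed.

(** * Continuity *)

Lemma ball_R (x e y : R) : ball x e y <-> Rabs (y - x) < e.
Proof. reflexivity. Qed.

Lemma continuous_eps_delta (h : R -> R) x :
  (forall eps, 0 < eps -> exists del, 0 < del /\ forall y, Rabs (y - x) < del -> Rabs (h y - h x) < eps) ->
  continuous h x.
Proof.
  intros H. apply filterlim_locally. intros eps.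
  destruct (H eps (cond_pos eps)) as [d [Hd Hd']]. exists (mkposreal d Hd). intros y Hy.
  apply ball_R. now apply Hd', ball_R.
Qed.

Lemma continuous_bounded_on (h : R -> R) a b : a <= b -> (forall x, continuous h x) ->
  exists M, forall x, a <= x <= b -> Rabs (h x) <= M.
Proof.
  intros Hab H.
  assert (Hc : forall x, a <= x <= b -> continuity_pt h x)
    by (intros; apply continuity_pt_filterlim, H).
  destruct (continuity_ab_maj h a b Hab Hc) as [x1 [H1 _]].
  destruct (continuity_ab_min h a b Hab Hc) as [x2 [H2 _]].
  exists (Rmax (Rabs (h x1)) (Rabs (h x2))). intros x Hx. specialize (H1 x Hx). specialize (H2 x Hx).
  unfold Rabs, Rmax. repeat destruct Rcase_abs; repeat destruct Rle_dec; lra.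
Qed.

Lemma continuous_unif_on (h : R -> R) a b : (forall x, continuous h x) ->
  forall eps, 0 < eps -> exists del, 0 < del /\
    forall x y, a <= x <= b -> a <= y <= b -> Rabs (x - y) < del -> Rabs (h x - h y) < eps.
Proof.
  intros H eps He.
  destruct (unifcont_normed_1d h a b (fun x _ => H x) (mkposreal eps He)) as [d Hd].
  exists d. split; [apply cond_pos|]. intros x y Hx Hy Hxy. apply (Hd y x Hy Hx). now apply ball_R.
Qed.

Lemma is_derive_continuous (f f' : R -> R) : (forall x, is_derive f x (f' x)) -> forall x, continuous f x.
Proof.
  intros H x. exact (ex_derive_continuous (K := R_AbsRing) (V := R_NormedModule) f x (ex_intro _ (f' x) (H x))).
Qed.

Lemma continuous_rpow_abs p : 1 <= p -> forall x, continuous (fun x => rpow (Rabs x) p) x.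
Proof.
  intros Hp x. apply continuous_eps_delta. intros eps He.
  destruct (Req_dec x 0) as [->|Hx].
  - exists (Rmin eps 1). split; [apply Rmin_glb_lt; lra|]. intros y Hy.
    rewrite Rminus_0_r in Hy. rewrite Rabs_R0, (rpow_nonpos 0), Rminus_0_r by lra.
    pose proof (Rmin_l eps 1). pose proof (Rmin_r eps 1).
    pose proof (rpow_le_self (Rabs y) p Hp ltac:(split; [apply Rabs_pos|lra])).
    rewrite Rabs_right by (apply Rle_ge, rpow_ge0). lra.
  - assert (Ha : 0 < Rabs x) by now apply Rabs_pos_lt.
    assert (C : continuity_pt (fun z => Rpower z p) (Rabs x)).
    { apply derivable_continuous_pt. exists (p * Rpower (Rabs x) (p - 1)). now apply derivable_pt_lim_power. }
    destruct (C eps He) as [d [Hd Hd']].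
    exists (Rmin d (Rabs x / 2)). split; [apply Rmin_glb_lt; lra|]. intros y Hy.
    pose proof (Rabs_triang_inv2 y x). pose proof (Rmin_l d (Rabs x / 2)). pose proof (Rmin_r d (Rabs x / 2)).
    assert (Hyx : Rabs (Rabs y - Rabs x) < Rabs x / 2) by lra.
    assert (0 < Rabs y) by (apply Rabs_def2 in Hyx; lra).
    rewrite !rpow_eq_Rpower by auto.
    destruct (Req_dec (Rabs y) (Rabs x)) as [->|Hne]; [rewrite Rminus_diag, Rabs_R0; lra|].
    apply (Hd' (Rabs y)). split; [split; [constructor|auto]|]. simpl. unfold R_dist. lra.
Qed.

Lemma holder_enclosure_continuous (h : R -> R) Sg : enclosure_IR h Sg -> holder_IR Sg ->
  forall x, continuous h x.
Proof.
  intros [_ E] [C [g [HC [Hg H]]]] x. apply continuous_eps_delta. intros eps He.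
  set (d := rpow (eps / (C + 1)) (1 / g)).
  assert (Hd : 0 < d) by (apply rpow_gt0, Rdiv_lt_0_compat; lra).
  exists d. split; auto. intros y Hy.
  set (X := mkItv (Rmin x y) (Rmax x y)).
  assert (HX : proper X) by (unfold proper, X; simpl; apply Rle_trans with x; [apply Rmin_l|apply Rmax_l]).
  assert (I1 : inI (h x) (Sg X)) by (apply E; auto; unfold inI, X; simpl; split; [apply Rmin_l|apply Rmax_l]).
  assert (I2 : inI (h y) (Sg X)) by (apply E; auto; unfold inI, X; simpl; split; [apply Rmin_r|apply Rmax_r]).
  assert (WX : width X = Rabs (y - x)).
  { unfold width, X; simpl. unfold Rmin, Rmax, Rabs. destruct Rle_dec; destruct Rcase_abs; lra. }
  assert (R1 : rpow (width X) g <= eps / (C + 1)).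
  { rewrite WX, <- (rpow_inv_exponent (eps / (C + 1)) g) by (auto; apply Rdiv_lt_0_compat; lra).
    apply rpow_le_compat; [lra|]. fold d. lra. }
  assert (Rabs (h y - h x) <= width (Sg X)) by (apply Rabs_le; unfold inI, width in *; lra).
  pose proof (H X HX). pose proof (Rmult_le_compat_l C _ _ HC R1).
  assert (C * (eps / (C + 1)) < eps).
  { replace (C * (eps / (C + 1))) with (eps - eps / (C + 1)) by (field; lra).
    assert (0 < eps / (C + 1)) by (apply Rdiv_lt_0_compat; lra). lra. }
  lra.
Qed.

(* Bounded and uniformly continuous on every cube [[-R0, R0]^n]: the class of integrands for which
   the iterated Riemann integrals below are well behaved. *)
Definition in_cube (n : nat) (R0 : R) (y : nat -> R) : Prop := forall j, (j < n)%nat -> Rabs (y j) <= R0.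
Definition close (n : nat) (d : R) (y z : nat -> R) : Prop := forall j, (j < n)%nat -> Rabs (y j - z j) < d.

Definition ucb (n : nat) (g : (nat -> R) -> R) : Prop :=
  forall R0, 0 <= R0 ->
    (exists M, forall y, in_cube n R0 y -> Rabs (g y) <= M) /\
    (forall eps, 0 < eps -> exists del, 0 < del /\
       forall y z, in_cube n R0 y -> in_cube n R0 z -> close n del y z -> Rabs (g y - g z) < eps).

Lemma close_Rmin n d1 d2 y z : close n (Rmin d1 d2) y z -> close n d1 y z /\ close n d2 y z.
Proof.
  intros H. split; intros j Hj; eapply Rlt_le_trans; try apply H; auto using Rmin_l, Rmin_r.
Qed.

Section Ucb.

Variable n : nat.

Lemma ucb_const c : ucb n (fun _ => c).
Proof.
  intros R0 HR. split; [exists (Rabs c); intros; lra|].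
  intros eps He. exists 1. split; [lra|]. intros. rewrite Rminus_diag, Rabs_R0; auto.
Qed.

Lemma ucb_coord j : (j < n)%nat -> ucb n (fun y => y j).
Proof.
  intros Hj R0 HR. split; [exists R0; intros y Hy; now apply Hy|].
  intros eps He. exists eps. split; [auto|]. intros y z _ _ Hc. now apply Hc.
Qed.

Lemma ucb_add f g : ucb n f -> ucb n g -> ucb n (fun y => f y + g y).
Proof.
  intros Hf Hg R0 HR. destruct (Hf R0 HR) as [[M1 HM1] HU1]. destruct (Hg R0 HR) as [[M2 HM2] HU2].
  split.
  - exists (M1 + M2). intros y Hy. eapply Rle_trans; [apply Rabs_triang|].
    specialize (HM1 y Hy); specialize (HM2 y Hy); lra.
  - intros eps He. destruct (HU1 (eps / 2) ltac:(lra)) as [d1 [Hd1 H1]].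
    destruct (HU2 (eps / 2) ltac:(lra)) as [d2 [Hd2 H2]].
    exists (Rmin d1 d2). split; [now apply Rmin_glb_lt|]. intros y z Hy Hz [Hc1 Hc2]%close_Rmin.
    specialize (H1 y z Hy Hz Hc1). specialize (H2 y z Hy Hz Hc2).
    replace (f y + g y - (f z + g z)) with ((f y - f z) + (g y - g z)) by ring.
    eapply Rle_lt_trans; [apply Rabs_triang|lra].
Qed.

Lemma ucb_mul f g : ucb n f -> ucb n g -> ucb n (fun y => f y * g y).
Proof.
  intros Hf Hg R0 HR. destruct (Hf R0 HR) as [[M1 HM1] HU1]. destruct (Hg R0 HR) as [[M2 HM2] HU2].
  set (A := Rabs M1 + 1). set (B := Rabs M2 + 1).
  assert (HA : forall y, in_cube n R0 y -> Rabs (f y) < A)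
    by (intros y Hy; specialize (HM1 y Hy); pose proof (Rle_abs M1); unfold A; lra).
  assert (HB : forall y, in_cube n R0 y -> Rabs (g y) < B)
    by (intros y Hy; specialize (HM2 y Hy); pose proof (Rle_abs M2); unfold B; lra).
  assert (HA0 : 0 < A) by (unfold A; pose proof (Rabs_pos M1); lra).
  assert (HB0 : 0 < B) by (unfold B; pose proof (Rabs_pos M2); lra).
  split.
  - exists (A * B). intros y Hy. rewrite Rabs_mult.
    apply Rmult_le_compat; try apply Rabs_pos; left; auto.
  - intros eps He.
    destruct (HU1 (eps / (2 * B)) ltac:(apply Rdiv_lt_0_compat; lra)) as [d1 [Hd1 H1]].
    destruct (HU2 (eps / (2 * A)) ltac:(apply Rdiv_lt_0_compat; lra)) as [d2 [Hd2 H2]].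
    exists (Rmin d1 d2). split; [now apply Rmin_glb_lt|]. intros y z Hy Hz [Hc1 Hc2]%close_Rmin.
    specialize (H1 y z Hy Hz Hc1). specialize (H2 y z Hy Hz Hc2).
    replace (f y * g y - f z * g z) with (f y * (g y - g z) + g z * (f y - f z)) by ring.
    eapply Rle_lt_trans; [apply Rabs_triang|]. rewrite !Rabs_mult.
    assert (Rabs (f y) * Rabs (g y - g z) <= A * (eps / (2 * A)))
      by (apply Rmult_le_compat; try apply Rabs_pos; left; auto).
    assert (Rabs (g z) * Rabs (f y - f z) < B * (eps / (2 * B))).
    { apply Rle_lt_trans with (B * Rabs (f y - f z)).
      - apply Rmult_le_compat_r; [apply Rabs_pos|left; auto].
      - now apply Rmult_lt_compat_l. }
    replace (A * (eps / (2 * A))) with (eps / 2) in * by (field; lra).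
    replace (B * (eps / (2 * B))) with (eps / 2) in * by (field; lra). lra.
Qed.

Lemma ucb_rsum m F : (forall j, (j < m)%nat -> ucb n (F j)) -> ucb n (fun y => rsum m (fun j => F j y)).
Proof.
  induction m as [|m IH]; intros H; simpl; [apply ucb_const|].
  apply (ucb_add (fun y => rsum m (fun j => F j y)) (F m)); [apply IH; intros|]; apply H; lia.
Qed.

Lemma ucb_comp (h : R -> R) g : (forall x, continuous h x) -> ucb n g -> ucb n (fun y => h (g y)).
Proof.
  intros Hh Hg R0 HR. destruct (Hg R0 HR) as [[M HM] HU].
  assert (Hin : forall y, in_cube n R0 y -> - Rabs M <= g y <= Rabs M).
  { intros y Hy. apply Rabs_le_between. eapply Rle_trans; [apply HM; auto|apply Rle_abs]. }
  destruct (continuous_bounded_on h (- Rabs M) (Rabs M) ltac:(pose proof (Rabs_pos M); lra) Hh) as [B HB].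
  split; [exists B; intros y Hy; apply HB; auto|].
  intros eps He. destruct (continuous_unif_on h (- Rabs M) (Rabs M) Hh eps He) as [d1 [Hd1 H1]].
  destruct (HU d1 Hd1) as [d [Hd H2]]. exists d. split; auto.
Qed.

Lemma in_cube_shift R0 x y r : in_cube n R0 x -> (forall j, (j < n)%nat -> Rabs (y j - x j) <= r) ->
  in_cube n (R0 + r) y.
Proof.
  intros Hx Hy j Hj. specialize (Hx j Hj). specialize (Hy j Hj).
  replace (y j) with (x j + (y j - x j)) by ring. eapply Rle_trans; [apply Rabs_triang|lra].
Qed.

Lemma in_cube_rmaxn x : in_cube n (rmaxn n (fun j => Rabs (x j))) x.
Proof. intros j Hj. apply (rmaxn_ge n (fun j => Rabs (x j))); auto. Qed.

Lemma in_cube_self R0 x r : in_cube n R0 x -> 0 <= r -> in_cube n (R0 + r) x.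
Proof. intros Hx Hr. apply (in_cube_shift R0 x); auto. intros. rewrite Rminus_diag, Rabs_R0; lra. Qed.

Lemma ucb_cont_Rn g : ucb n g -> cont_Rn n g.
Proof.
  intros H x eps He. set (R0 := rmaxn n (fun j => Rabs (x j))).
  assert (HR : 0 <= R0 + 1) by (pose proof (rmaxn_ge0 n (fun j => Rabs (x j))); unfold R0; lra).
  destruct (H (R0 + 1) HR) as [_ HU]. destruct (HU eps He) as [d [Hd Hd']].
  exists (Rmin d 1). split; [apply Rmin_glb_lt; lra|]. intros y Hy.
  pose proof (Rmin_l d 1). pose proof (Rmin_r d 1).
  apply Hd'; [|apply in_cube_self; [apply in_cube_rmaxn|lra]|].
  - apply (in_cube_shift R0 x); [apply in_cube_rmaxn|]. intros j Hj. specialize (Hy j Hj). lra.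
  - intros j Hj. specialize (Hy j Hj). lra.
Qed.

Lemma ucb_line g y m : ucb n g -> forall t, continuous (fun t => g (upd y m t)) t.
Proof.
  intros H t. apply continuous_eps_delta. intros eps He.
  set (R0 := rmaxn n (fun j => Rabs (y j)) + Rabs t).
  assert (HR : 0 <= R0 + 1)
    by (pose proof (rmaxn_ge0 n (fun j => Rabs (y j))); pose proof (Rabs_pos t); unfold R0; lra).
  destruct (H (R0 + 1) HR) as [_ HU]. destruct (HU eps He) as [d [Hd Hd']].
  exists (Rmin d 1). split; [apply Rmin_glb_lt; lra|]. intros r Hr.
  pose proof (Rmin_l d 1). pose proof (Rmin_r d 1).
  assert (Hin : forall a, Rabs a <= Rabs t + 1 -> in_cube n (R0 + 1) (upd y m a)).
  { intros a Ha j Hj. unfold upd, R0. pose proof (rmaxn_ge0 n (fun j => Rabs (y j))).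
    destruct (Nat.eqb j m); [lra|]. pose proof (in_cube_rmaxn y j Hj). pose proof (Rabs_pos t). lra. }
  apply Hd'; apply Hin || (intros j Hj; unfold upd; destruct (Nat.eqb j m)).
  - pose proof (Rabs_triang_inv r t). lra.
  - lra.
  - lra.
  - rewrite Rminus_diag, Rabs_R0. lra.
Qed.

End Ucb.

Section NetworkUcb.

Variables (N : Net) (s s' s'' : R -> R).
Hypotheses (Hs : forall x, continuous s x) (Hs' : forall x, continuous s' x)
  (Hs'' : forall x, continuous s'' x).

Let n := nd N 0.

Lemma ucb_weighted_sum k (x : (nat -> R) -> nat -> R) i :
  (forall j, (j < nd N k)%nat -> ucb n (fun u => x u j)) ->
  ucb n (fun u => rsum (nd N k) (fun j => nW N k i j * x u j)).
Proof.
  intros H. apply (ucb_rsum n _ (fun j u => nW N k i j * x u j)). intros j Hj.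
  apply ucb_mul; auto using ucb_const.
Qed.

Lemma ucb_xval l m : (m < nd N l)%nat -> ucb n (fun u => xval N s l u m).
Proof.
  revert m. induction l as [|l IH]; intros m Hm; simpl; [now apply ucb_coord|].
  apply (ucb_comp n s (fun u => _ + _)); auto.
  apply ucb_add; auto using ucb_const, ucb_weighted_sum.
Qed.

Lemma ucb_zval l i : ucb n (fun u => zval N s l u i).
Proof. apply ucb_add; auto using ucb_const, ucb_weighted_sum, ucb_xval. Qed.

Lemma ucb_dxval c l m : ucb n (fun u => dxval N s s' c l u m).
Proof.
  revert m. induction l as [|l IH]; intros m; simpl; [apply ucb_const|].
  apply ucb_mul; auto using ucb_weighted_sum.
  apply (ucb_comp n s' (fun u => zval N s l u m)); auto using ucb_zval.
Qed.

Lemma ucb_dzval c l i : ucb n (fun u => dzval N s s' c l u i).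
Proof. apply ucb_weighted_sum. intros. apply ucb_dxval. Qed.

Lemma ucb_ddxval c e l m : ucb n (fun u => ddxval N s s' s'' c e l u m).
Proof.
  revert m. induction l as [|l IH]; intros m; simpl; [apply ucb_const|].
  apply ucb_add; repeat apply ucb_mul; auto using ucb_weighted_sum, ucb_dzval.
  - apply (ucb_comp n s'' (fun u => zval N s l u m)); auto using ucb_zval.
  - apply (ucb_comp n s' (fun u => zval N s l u m)); auto using ucb_zval.
Qed.

Lemma ucb_ddzval c e l i : ucb n (fun u => ddzval N s s' s'' c e l u i).
Proof. apply ucb_weighted_sum. intros. apply ucb_ddxval. Qed.

End NetworkUcb.

Section IntegrandUcb.

Variables (N : Net) (s s' s'' : R -> R) (p : R).
Hypotheses (Hs : forall x, is_derive s x (s' x)) (Hs' : forall x, is_derive s' x (s'' x))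
  (Hs'' : forall x, continuous s'' x) (Hp : 1 <= p).

Let Cs := is_derive_continuous s s' Hs.
Let Cs' := is_derive_continuous s' s'' Hs'.

Lemma ucb_pow_Phi i : ucb (nd N 0) (fun x => rpow (Rabs (Phi N s i x)) p).
Proof.
  apply (ucb_comp _ (fun x => rpow (Rabs x) p) (fun x => zval N s (nL N) x i)).
  - now apply continuous_rpow_abs.
  - now apply ucb_zval.
Qed.

Lemma ucb_pow_pd_Phi i j : ucb (nd N 0) (fun x => rpow (Rabs (pd j (Phi N s i) x)) p).
Proof.
  rewrite (pd_Phi_eq N s s' Hs).
  apply (ucb_comp _ (fun x => rpow (Rabs x) p) (fun x => dzval N s s' j (nL N) x i)).
  - now apply continuous_rpow_abs.
  - now apply ucb_dzval.
Qed.

Lemma ucb_pow_pd_pd_Phi i j k : ucb (nd N 0) (fun x => rpow (Rabs (pd k (pd j (Phi N s i)) x)) p).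
Proof.
  rewrite (pd_pd_Phi_eq N s s' s'' Hs Hs').
  apply (ucb_comp _ (fun x => rpow (Rabs x) p) (fun x => ddzval N s s' s'' j k (nL N) x i)).
  - now apply continuous_rpow_abs.
  - now apply ucb_ddzval.
Qed.

Lemma ucb_f_Phi : ucb (nd N 0) (f_Phi N s p).
Proof.
  apply (ucb_rsum _ _ (fun i x => _ + _ + _)). intros i _.
  repeat apply ucb_add; [apply ucb_pow_Phi| |].
  - apply (ucb_rsum _ _ (fun j x => rpow (Rabs (pd j (Phi N s i) x)) p)). intros. apply ucb_pow_pd_Phi.
  - apply (ucb_rsum _ _ (fun j x => rsum _ (fun t => rpow (Rabs (pd (j + t) (pd j (Phi N s i)) x)) p))).
    intros j _. apply (ucb_rsum _ _ (fun t x => rpow (Rabs (pd (j + t) (pd j (Phi N s i)) x)) p)).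
    intros. apply ucb_pow_pd_pd_Phi.
Qed.

End IntegrandUcb.

(** * Integrals over boxes *)

Lemma ex_RInt_continuous_R (f : R -> R) a b : (forall t, continuous f t) -> ex_RInt f a b.
Proof. intros H. apply (ex_RInt_continuous (V := R_CompleteNormedModule) f a b). intros; apply H. Qed.

Lemma continuous_Rplus (f g : R -> R) t : continuous f t -> continuous g t -> continuous (fun x => f x + g x) t.
Proof. intros. now apply (continuous_plus f g t). Qed.

Lemma continuous_Rminus (f g : R -> R) t : continuous f t -> continuous g t -> continuous (fun x => f x - g x) t.
Proof. intros. now apply (continuous_minus f g t). Qed.

Lemma continuous_Rconst (c t : R) : continuous (fun _ : R => c) t.
Proof. apply (continuous_const (U := R_UniformSpace) (V := R_UniformSpace) c t). Qed.

Lemma continuous_rsum k (F : nat -> R -> R) t : (forall j, (j < k)%nat -> continuous (F j) t) ->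
  continuous (fun x => rsum k (fun j => F j x)) t.
Proof.
  induction k as [|k IH]; simpl; intros H; [apply continuous_Rconst|].
  apply continuous_Rplus; [apply IH; intros|]; apply H; lia.
Qed.

Lemma RInt_Rplus (f g : R -> R) a b : (forall t, continuous f t) -> (forall t, continuous g t) ->
  RInt (fun x => f x + g x) a b = RInt f a b + RInt g a b.
Proof. intros. apply (RInt_plus f g a b); now apply ex_RInt_continuous_R. Qed.

Lemma RInt_Rminus (f g : R -> R) a b : (forall t, continuous f t) -> (forall t, continuous g t) ->
  RInt (fun x => f x - g x) a b = RInt f a b - RInt g a b.
Proof. intros. apply (RInt_minus f g a b); now apply ex_RInt_continuous_R. Qed.

Lemma RInt_Rconst (c a b : R) : RInt (fun _ => c) a b = (b - a) * c.
Proof. rewrite RInt_const. reflexivity. Qed.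

Lemma RInt_rsum k (F : nat -> R -> R) a b : (forall j, (j < k)%nat -> forall t, continuous (F j) t) ->
  RInt (fun x => rsum k (fun j => F j x)) a b = rsum k (fun j => RInt (F j) a b).
Proof.
  induction k as [|k IH]; simpl; intros H; [rewrite RInt_Rconst; ring|].
  rewrite RInt_Rplus, IH; auto.
  intros t. apply continuous_rsum. intros. apply H; lia.
Qed.

Lemma RInt_abs_le_const (f : R -> R) a b M : (forall t, continuous f t) ->
  (forall t, Rmin a b <= t <= Rmax a b -> Rabs (f t) <= M) -> Rabs (RInt f a b) <= Rabs (b - a) * M.
Proof.
  intros Hc Hf. destruct (Rle_dec a b).
  - rewrite (Rabs_right (b - a)) by lra. apply abs_RInt_le_const; auto using ex_RInt_continuous_R.
    intros. apply Hf. rewrite Rmin_left, Rmax_right; lra.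
  - rewrite <- opp_RInt_swap by now apply ex_RInt_continuous_R.
    change (Rabs (- RInt f b a) <= Rabs (b - a) * M).
    rewrite Rabs_Ropp, (Rabs_left (b - a)), Ropp_minus_distr by lra.
    apply abs_RInt_le_const; auto using ex_RInt_continuous_R; [lra|].
    intros. apply Hf. rewrite Rmin_right, Rmax_left; lra.
Qed.

Lemma RInt_le_R (f g : R -> R) a b : a <= b -> (forall t, continuous f t) -> (forall t, continuous g t) ->
  (forall t, a <= t <= b -> f t <= g t) -> RInt f a b <= RInt g a b.
Proof. intros. apply RInt_le; auto using ex_RInt_continuous_R. intros; apply H2; lra. Qed.

Lemma RInt_Chasles_uniform (f : R -> R) a h k : (forall t, continuous f t) ->
  rsum k (fun t => RInt f (a + INR t * h) (a + INR (S t) * h)) = RInt f a (a + INR k * h).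
Proof.
  intros Hf. induction k as [|k IH].
  - simpl. replace (a + 0 * h) with a by ring. now rewrite RInt_point.
  - change (rsum k (fun t => RInt f (a + INR t * h) (a + INR (S t) * h))
      + RInt f (a + INR k * h) (a + INR (S k) * h) = RInt f a (a + INR (S k) * h)).
    rewrite IH. apply (RInt_Chasles f); now apply ex_RInt_continuous_R.
Qed.

Section BoxIntegral.

Variable n : nat.

Lemma ucb_iint B g : ucb n g -> forall m, ucb n (iint B m g).
Proof.
  intros Hg m. induction m as [|m IH]; simpl; auto.
  intros R0 HR. set (a := lo (B m)). set (b := hi (B m)).
  set (R1 := Rmax R0 (Rmax (Rabs a) (Rabs b))).
  assert (HR1 : 0 <= R1) by (eapply Rle_trans; [apply HR|apply Rmax_l]).
  destruct (IH R1 HR1) as [[M HM] HU].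
  assert (Hin : forall y t, in_cube n R0 y -> Rmin a b <= t <= Rmax a b -> in_cube n R1 (upd y m t)).
  { intros y t Hy Ht j Hj. unfold upd, R1. destruct (Nat.eqb j m).
    - eapply Rle_trans; [|apply Rmax_r]. apply Rabs_le.
      pose proof (Rmax_l (Rabs a) (Rabs b)). pose proof (Rmax_r (Rabs a) (Rabs b)).
      pose proof (Rle_abs a). pose proof (Rle_abs b). pose proof (Rabs_maj2 a). pose proof (Rabs_maj2 b).
      unfold Rmin, Rmax in Ht. destruct Rle_dec; lra.
    - eapply Rle_trans; [apply Hy; auto|apply Rmax_l]. }
  split.
  - exists (Rabs (b - a) * M). intros y Hy. apply RInt_abs_le_const; [now apply (ucb_line n)|]. intros. now apply HM, Hin.
  - intros eps He. set (w := Rabs (b - a)). assert (0 <= w) by apply Rabs_pos.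
    destruct (HU (eps / (w + 1)) ltac:(apply Rdiv_lt_0_compat; lra)) as [d [Hd Hd']].
    exists d. split; auto. intros y z Hy Hz Hc.
    rewrite <- RInt_Rminus by now apply (ucb_line n).
    eapply Rle_lt_trans.
    { apply RInt_abs_le_const; [intros; apply continuous_Rminus; now apply (ucb_line n)|].
      intros t Ht. left. apply Hd'; auto. intros j Hj. unfold upd.
      destruct (Nat.eqb j m); [rewrite Rminus_diag, Rabs_R0; lra|now apply Hc]. }
    fold w. replace (w * (eps / (w + 1))) with (eps - eps / (w + 1)) by (field; lra).
    assert (0 < eps / (w + 1)) by (apply Rdiv_lt_0_compat; lra). lra.
Qed.

Lemma iint_plus B f g : ucb n f -> ucb n g ->
  forall m x, iint B m (fun y => f y + g y) x = iint B m f x + iint B m g x.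
Proof.
  intros Hf Hg m. induction m as [|m IH]; intros x; simpl; auto.
  rewrite <- RInt_Rplus by (intros; apply (ucb_line n), ucb_iint; auto).
  f_equal. apply functional_extensionality; intros t; auto.
Qed.

Lemma iint_const B c : forall m x, iint B m (fun _ => c) x = c * rprod m (fun j => width (B j)).
Proof.
  intros m. induction m as [|m IH]; intros x; simpl; [ring|].
  rewrite (RInt_ext _ (fun _ => c * rprod m (fun j => width (B j)))) by auto.
  rewrite RInt_Rconst. unfold width. ring.
Qed.

Lemma iint_rsum B k (F : nat -> (nat -> R) -> R) : (forall j, (j < k)%nat -> ucb n (F j)) ->
  forall m x, iint B m (fun y => rsum k (fun j => F j y)) x = rsum k (fun j => iint B m (F j) x).
Proof.
  induction k as [|k IH]; intros H m x; simpl; [rewrite iint_const; ring|].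
  rewrite (iint_plus B (fun y => rsum k (fun j => F j y)) (F k)), IH; auto.
  apply (ucb_rsum n k F). intros; apply H; lia.
Qed.

Lemma iint_bounds B g c c' : ucb n g -> (forall j, (j < n)%nat -> lo (B j) <= hi (B j)) ->
  (forall y, inbox n y B -> c <= g y <= c') ->
  forall m, (m <= n)%nat -> forall x, (forall j, (m <= j < n)%nat -> inI (x j) (B j)) ->
  c * rprod m (fun j => width (B j)) <= iint B m g x <= c' * rprod m (fun j => width (B j)).
Proof.
  intros Hg HB Hc m. induction m as [|m IH]; intros Hm x Hx; simpl.
  - rewrite !Rmult_1_r. apply Hc. intros j Hj. apply Hx; lia.
  - assert (Hab : lo (B m) <= hi (B m)) by (apply HB; lia).
    set (V := rprod m (fun j => width (B j))).
    assert (Hin : forall t, lo (B m) <= t <= hi (B m) -> c * V <= iint B m g (upd x m t) <= c' * V).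
    { intros t Ht. apply IH; [lia|]. intros j Hj. unfold upd.
      destruct (Nat.eqb_spec j m) as [->|]; [exact Ht|apply Hx; lia]. }
    assert (Hcont : forall t, continuous (fun t => iint B m g (upd x m t)) t)
      by (intros; apply (ucb_line n), ucb_iint; auto).
    split.
    + apply Rle_trans with (RInt (fun _ => c * V) (lo (B m)) (hi (B m))).
      * rewrite RInt_Rconst. unfold width. right; ring.
      * apply RInt_le_R; auto using continuous_Rconst. intros; now apply Hin.
    + apply Rle_trans with (RInt (fun _ => c' * V) (lo (B m)) (hi (B m))).
      * apply RInt_le_R; auto using continuous_Rconst. intros; now apply Hin.
      * rewrite RInt_Rconst. unfold width. right; ring.
Qed.

Lemma box_integral_bounds f K a b : ucb n f -> binterior n K -> (forall y, inbox n y K -> a <= f y <= b) ->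
  a * bvol n K <= box_integral n K f <= b * bvol n K.
Proof.
  intros Hf HK Hb. apply iint_bounds; auto; [|lia].
  intros j Hj. specialize (HK j Hj). lra.
Qed.

Lemma box_integral_one B : box_integral n B (fun _ => 1) = bvol n B.
Proof. unfold box_integral. rewrite iint_const. apply Rmult_1_l. Qed.

Lemma iint_upd_above B c X g : forall m, (m <= c)%nat -> forall x, iint (upd B c X) m g x = iint B m g x.
Proof.
  induction m as [|m IH]; intros Hm x; simpl; auto.
  rewrite upd_neq by lia.
  f_equal. apply functional_extensionality; intros t. apply IH; lia.
Qed.

Lemma iint_split B c mm g : ucb n g -> (0 < mm)%nat ->
  forall m, (c < m)%nat -> forall x,
  rsum mm (fun t => iint (upd B c (piece (B c) mm t)) m g x) = iint B m g x.
Proof.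
  intros Hg Hmm m. induction m as [|m IH]; intros Hm x; [lia|]. simpl iint.
  destruct (Nat.eq_dec m c) as [->|Hmc].
  - transitivity (rsum mm (fun t => RInt (fun s => iint B c g (upd x c s))
      (lo (B c) + INR t * (width (B c) / INR mm)) (lo (B c) + INR (S t) * (width (B c) / INR mm)))).
    { apply rsum_ext. intros t _. rewrite upd_eq. unfold piece; simpl. f_equal.
      - apply functional_extensionality; intros s. apply iint_upd_above; lia.
      - unfold Rdiv; ring.
      - unfold Rdiv; ring. }
    rewrite RInt_Chasles_uniform by (intros; apply (ucb_line n), ucb_iint; auto).
    f_equal. unfold width. field. apply not_0_INR. lia.
  - transitivity (rsum mm (fun t => RInt (fun s => iint (upd B c (piece (B c) mm t)) m g (upd x m s))
      (lo (B m)) (hi (B m)))).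
    { apply rsum_ext. intros t _. now rewrite upd_neq. }
    rewrite <- RInt_rsum by (intros; apply (ucb_line n), ucb_iint; auto).
    f_equal. apply functional_extensionality; intros s. apply IH; lia.
Qed.

End BoxIntegral.

(** * Hoelder refinement *)

Lemma ceil_nat_ge x : x <= INR (ceil_nat x).
Proof.
  unfold ceil_nat. destruct (archimed (- x)) as [H1 H2].
  assert (x <= IZR (1 - up (- x))) by (rewrite minus_IZR; simpl IZR; lra).
  destruct (Z_le_gt_dec 0 (1 - up (- x))).
  - now rewrite INR_IZR_INZ, Z2Nat.id.
  - assert (IZR (1 - up (- x)) < 0) by (apply IZR_lt; lia).
    pose proof (pos_INR (Z.to_nat (1 - up (- x)))). lra.
Qed.

Lemma ceil_nat_gt0 x : 0 < x -> (0 < ceil_nat x)%nat.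
Proof. intros Hx. pose proof (ceil_nat_ge x). destruct (ceil_nat x); [simpl in *; lra|lia]. Qed.

Lemma piece_props X m t : proper X -> (t < m)%nat ->
  lo X <= lo (piece X m t) /\ hi (piece X m t) <= hi X /\ width (piece X m t) = width X / INR m.
Proof.
  intros HX Ht. assert (Hm : 0 < INR m) by (apply lt_0_INR; lia).
  assert (Hw : 0 <= width X / INR m) by (apply Rdiv_le_0_compat; auto; unfold width, proper in *; lra).
  assert (Htm : INR (S t) <= INR m) by (apply le_INR; lia).
  pose proof (pos_INR t).
  assert (E : forall k, lo X + INR k * width X / INR m = lo X + INR k * (width X / INR m))
    by (intros; unfold Rdiv; ring).
  unfold piece; cbn [lo hi]. rewrite !E. split; [|split].
  - pose proof (Rmult_le_pos _ _ H Hw). lra.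
  - pose proof (Rmult_le_compat_r _ _ _ Hw Htm).
    replace (INR m * (width X / INR m)) with (width X) in * by (field; lra). unfold width in *; lra.
  - unfold width at 1; cbn [lo hi]. rewrite S_INR. field. lra.
Qed.

Lemma split_boxes_above K mv c : forall B, In B (split_boxes K mv c) -> forall j, (c <= j)%nat -> B j = K j.
Proof.
  induction c as [|c IH]; simpl; intros B HB j Hj; [now destruct HB as [<-|[]]|].
  apply in_flat_map in HB. destruct HB as [B0 [HB0 HB]]. apply in_map_iff in HB.
  destruct HB as [t [<- _]]. rewrite upd_neq by lia. apply IH; auto. lia.
Qed.

Lemma split_boxes_below K mv c : (forall j, (j < c)%nat -> proper (K j) /\ (0 < mv j)%nat) ->
  forall B, In B (split_boxes K mv c) -> forall j, (j < c)%nat ->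
    lo (K j) <= lo (B j) /\ hi (B j) <= hi (K j) /\ width (B j) = width (K j) / INR (mv j).
Proof.
  induction c as [|c IH]; simpl; intros HK B HB j Hj; [lia|].
  apply in_flat_map in HB. destruct HB as [B0 [HB0 HB]]. apply in_map_iff in HB.
  destruct HB as [t [<- Ht]]. apply in_seq in Ht. unfold upd. destruct (Nat.eqb_spec j c) as [->|].
  - apply piece_props; [apply HK|]; lia.
  - apply IH; [intros; apply HK; lia|auto|lia].
Qed.

Lemma split_boxes_integral n K mv g : ucb n g -> forall c, (c <= n)%nat -> (forall j, (j < c)%nat -> (0 < mv j)%nat) ->
  lsum (map (fun B => box_integral n B g) (split_boxes K mv c)) = box_integral n K g.
Proof.
  intros Hg c. induction c as [|c IH]; intros Hc Hmv; simpl; [unfold lsum; simpl; ring|].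
  rewrite lsum_flat_map, <- IH by (auto; lia).
  apply lsum_map_ext. intros B HB. rewrite map_map, lsum_map_seq.
  rewrite <- (split_boxes_above K mv c B HB c) by lia. apply (iint_split n); auto.
Qed.

Lemma split_boxes_vol n K mv : (forall j, (j < n)%nat -> (0 < mv j)%nat) ->
  lsum (map (bvol n) (split_boxes K mv n)) = bvol n K.
Proof.
  intros H. rewrite <- box_integral_one, <- (split_boxes_integral n K mv (fun _ => 1) (ucb_const n 1) n)
    by auto.
  apply lsum_map_ext. intros. now rewrite box_integral_one.
Qed.

Lemma split_boxes_sub n K mv : binterior n K -> (forall j, (j < n)%nat -> (0 < mv j)%nat) ->
  forall B, In B (split_boxes K mv n) -> binterior n B /\ bsub n B K.
Proof.
  intros HK Hmv B HB.
  assert (HL := split_boxes_below K mv n (fun j Hj => conj (binterior_proper n K HK j Hj) (Hmv j Hj)) B HB).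
  split; intros j Hj; destruct (HL j Hj) as [A1 [A2 W]]; [|split; auto].
  assert (0 < width (B j)).
  { rewrite W. apply Rdiv_lt_0_compat; [specialize (HK j Hj); unfold width; lra|apply lt_0_INR; auto]. }
  unfold width in *; lra.
Qed.

Lemma split_boxes_bwidth n K r : 0 < r -> binterior n K ->
  forall B, In B (split_boxes K (fun j => ceil_nat (width (K j) * r)) n) -> bwidth n B <= / r.
Proof.
  intros Hr HK B HB.
  assert (Hw : forall j, (j < n)%nat -> 0 < width (K j)) by (intros j Hj; specialize (HK j Hj); unfold width; lra).
  assert (Hmv : forall j, (j < n)%nat -> (0 < ceil_nat (width (K j) * r))%nat)
    by (intros; apply ceil_nat_gt0, Rmult_lt_0_compat; auto).
  apply rmaxn_le; [left; now apply Rinv_0_lt_compat|]. intros j Hj.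
  destruct (split_boxes_below K _ n (fun j Hj => conj (binterior_proper n K HK j Hj) (Hmv j Hj)) B HB j Hj)
    as [_ [_ ->]].
  pose proof (ceil_nat_ge (width (K j) * r)). assert (0 < INR (ceil_nat (width (K j) * r))) by auto using lt_0_INR.
  apply (Rmult_le_reg_r (INR (ceil_nat (width (K j) * r)))); auto.
  unfold Rdiv. rewrite Rmult_assoc, Rinv_l, Rmult_1_r by lra.
  apply (Rmult_le_reg_l r); auto. rewrite <- Rmult_assoc, Rinv_r by lra. lra.
Qed.

Section HolderRefinement.

Variables (n : nat) (Om : box) (F : box -> Itv) (C g rho : R).
Hypotheses (Hrho : 0 < rho) (HF : holder_const n Om F C g)
  (HFw : forall K, bproper n K -> bsub n K Om -> 0 <= width (F K)).

Lemma holder_refine_split K : binterior n K -> bsub n K Om ->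
  (etaK n F K = 0 /\ holder_refine n F C g rho K = [K]) \/
  exists r, 0 < r /\ C * rpow (/ r) g * bvol n K = rho * etaK n F K /\
    holder_refine n F C g rho K = split_boxes K (fun j => ceil_nat (width (K j) * r)) n.
Proof.
  intros HK HKO. unfold holder_refine. destruct (Req_EM_T (etaK n F K) 0) as [E0|E0]; [now left|right].
  destruct HF as [HC [Hg HH]]. assert (HKp := binterior_proper n K HK).
  set (e := etaK n F K) in *. set (vol := bvol n K).
  assert (Hvol : 0 < vol) by now apply bvol_gt0.
  assert (He : 0 < e).
  { destruct (HFw K HKp HKO) as [Hw|Hw]; [now apply Rmult_lt_0_compat|].
    exfalso. apply E0. unfold e, etaK. rewrite <- Hw. ring. }
  assert (HCp : 0 < C).
  { destruct HC as [HC|HC]; auto. specialize (HH K HKp HKO). rewrite <- HC in HH.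
    unfold e, etaK in He. fold vol in He. nra. }
  set (Y := C * vol / (rho * e)).
  assert (HY : 0 < Y) by (apply Rdiv_lt_0_compat; apply Rmult_lt_0_compat; auto).
  exists (rpow Y (1 / g)). split; [now apply rpow_gt0|split; auto].
  rewrite rpow_Rinv, rpow_inv_exponent by (auto using rpow_gt0). unfold Y. field. lra.
Qed.

Lemma holder_refine_sub K : binterior n K -> bsub n K Om ->
  forall B, In B (holder_refine n F C g rho K) -> binterior n B /\ bsub n B K.
Proof.
  intros HK HKO B HB. destruct (holder_refine_split K HK HKO) as [[_ E]|[r [Hr [_ E]]]]; rewrite E in HB.
  - destruct HB as [<-|[]]. split; auto using bsub_refl.
  - apply (split_boxes_sub n K (fun j => ceil_nat (width (K j) * r)) HK); auto. intros j Hj. apply ceil_nat_gt0, Rmult_lt_0_compat; auto.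
    specialize (HK j Hj). unfold width; lra.
Qed.

Lemma holder_refine_integral K h : binterior n K -> bsub n K Om -> ucb n h ->
  lsum (map (fun B => box_integral n B h) (holder_refine n F C g rho K)) = box_integral n K h.
Proof.
  intros HK HKO Hh. destruct (holder_refine_split K HK HKO) as [[_ E]|[r [Hr [_ E]]]]; rewrite E.
  - unfold lsum; simpl; ring.
  - apply split_boxes_integral; auto. intros j Hj. apply ceil_nat_gt0, Rmult_lt_0_compat; auto.
    specialize (HK j Hj). unfold width; lra.
Qed.

Lemma holder_refine_eta K : binterior n K -> bsub n K Om ->
  lsum (map (etaK n F) (holder_refine n F C g rho K)) <= rho * etaK n F K.
Proof.
  intros HK HKO. destruct (holder_refine_split K HK HKO) as [[E0 E]|[r [Hr [Hre E]]]]; rewrite E.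
  - unfold lsum; simpl. rewrite E0. lra.
  - destruct HF as [HC [Hg HH]].
    assert (Hmv : forall j, (j < n)%nat -> (0 < ceil_nat (width (K j) * r))%nat).
    { intros j Hj. apply ceil_nat_gt0, Rmult_lt_0_compat; auto. specialize (HK j Hj). unfold width; lra. }
    eapply Rle_trans.
    { apply (lsum_map_le _ (fun B => (C * rpow (/ r) g) * bvol n B)). intros B HB.
      destruct (split_boxes_sub n K _ HK Hmv B HB) as [HBi HBs].
      apply Rmult_le_compat_r; [apply bvol_ge0, binterior_proper; auto|].
      eapply Rle_trans; [apply HH; eauto using binterior_proper, bsub_trans|].
      apply Rmult_le_compat_l; auto. apply rpow_le_compat; [lra|].
      now apply (split_boxes_bwidth n K r). }
    rewrite lsum_map_mull, split_boxes_vol by auto. lra.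
Qed.

End HolderRefinement.

(** * Doerfler marking *)

Lemma map_fst_combine {A B} (l1 : list A) (l2 : list B) : length l1 = length l2 -> map fst (combine l1 l2) = l1.
Proof. revert l2; induction l1; intros [|b l2] H; simpl in *; auto; try lia. f_equal. apply IHl1; lia. Qed.

Lemma map_snd_combine {A B} (l1 : list A) (l2 : list B) : length l1 = length l2 -> map snd (combine l1 l2) = l2.
Proof. revert l2; induction l1; intros [|b l2] H; simpl in *; auto; try lia. f_equal. apply IHl1; lia. Qed.

Lemma combine_map_l {A A' B} (h : A -> A') (l1 : list A) (l2 : list B) :
  combine (map h l1) l2 = map (fun ab => (h (fst ab), snd ab)) (combine l1 l2).
Proof. revert l2; induction l1; intros [|b l2]; simpl; auto. f_equal; auto. Qed.

Lemma fold_left_Rmax_in l x : fold_left Rmax l x = x \/ In (fold_left Rmax l x) l.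
Proof.
  revert x. induction l as [|a l IH]; intros x; simpl; auto.
  destruct (IH (Rmax x a)) as [->|H]; [|now right; right].
  apply (Rmax_case x a (fun r => r = x \/ a = r \/ In r l)); auto.
Qed.

Lemma maxlist_in l : l <> [] -> In (maxlist l) l.
Proof.
  destruct l as [|x l]; intros H; [congruence|]. simpl.
  destruct (fold_left_Rmax_in l x) as [->|E]; auto.
Qed.

Lemma filter_length_lt {A} (p q : A -> bool) l :
  (forall x, p x = true -> q x = true) -> (exists x, In x l /\ q x = true /\ p x = false) ->
  (length (filter p l) < length (filter q l))%nat.
Proof.
  intros Hpq. induction l as [|a l IH]; intros [x [Hx [Hq Hp]]]; [destruct Hx|].
  assert (Hle : forall l', (length (filter p l') <= length (filter q l'))%nat).
  { induction l' as [|b l' IH']; simpl; [lia|].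
    destruct (p b) eqn:E; [rewrite (Hpq b E); simpl; lia|destruct (q b); simpl; lia]. }
  simpl. destruct Hx as [<-|Hx].
  - rewrite Hp, Hq. simpl. specialize (Hle l). lia.
  - assert (length (filter p l) < length (filter q l))%nat by (apply IH; eauto).
    destruct (p a) eqn:E; [rewrite (Hpq a E); simpl; lia|destruct (q a); simpl; lia].
Qed.

(* Each unsuccessful round marks at least one more element, so [length es + 1] rounds suffice. *)
Lemma dorfler_aux_spec theta es : 0 <= theta <= 1 -> 0 <= lsum es ->
  forall fuel mask, length mask = length es -> (length (filter negb mask) < fuel)%nat ->
  length (dorfler_aux theta (lsum es) es fuel mask) = length es /\
  theta * lsum es <= lsum (map fst (filter snd (combine es (dorfler_aux theta (lsum es) es fuel mask)))).
Proof.
  intros Hth Htot fuel. induction fuel as [|fuel IH]; intros mask Hlen Hcnt; [lia|].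
  simpl. destruct (Rle_dec (theta * lsum es) (lsum (map fst (filter snd (combine es mask))))) as [Hok|Hko];
    [auto|].
  set (L := combine es mask).
  assert (HLf : map fst L = es) by now apply map_fst_combine.
  assert (HLs : map snd L = mask) by now apply map_snd_combine.
  set (U := map fst (filter (fun eb : R * bool => negb (snd eb)) L)).
  set (mx := maxlist U).
  set (gf := fun eb : R * bool => if snd eb then true else if Req_EM_T (fst eb) mx then true else false).
  assert (HU : U <> []).
  { intros HU. apply Hko. unfold U in HU. apply map_eq_nil in HU.
    assert (E : filter snd L = L).
    { clear -HU. induction L as [|a L IH]; simpl in *; auto.
      destruct (snd a); simpl in *; [f_equal; auto|discriminate]. }
    fold L. rewrite E, HLf. nra. }
  apply IH.
  - rewrite length_map. unfold L. rewrite length_combine, Hlen. apply Nat.min_id.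
  - assert (length (filter negb (map gf L)) < length (filter negb mask))%nat.
    { rewrite <- HLs, !filter_map_swap, !length_map. apply filter_length_lt.
      - intros [x b]. unfold gf; simpl. destruct b; simpl; auto.
      - destruct (proj1 (in_map_iff (@fst R bool) _ mx) (maxlist_in U HU)) as [[x b] [Hx Hin]].
        simpl in Hx. apply filter_In in Hin. destruct Hin as [Hin Hb]. simpl in Hb.
        exists (x, b). destruct b; simpl in *; [discriminate|]. split; auto. split; auto.
        unfold gf; simpl. destruct (Req_EM_T x mx); [auto|congruence]. }
    fold L. lia.
Qed.

Lemma dorfler_spec theta es : 0 <= theta <= 1 -> 0 <= lsum es ->
  length (dorfler theta es) = length es /\
  theta * lsum es <= lsum (map fst (filter snd (combine es (dorfler theta es)))).
Proof.
  intros. apply dorfler_aux_spec; auto using repeat_length.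
  pose proof (filter_length_le negb (repeat false (length es))). rewrite repeat_length in *. lia.
Qed.

(** * AdaQuad *)

Definition partition_of (n : nat) (Om : box) (P : list box) : Prop :=
  (forall K, In K P -> binterior n K /\ bsub n K Om) /\
  (forall h, ucb n h -> lsum (map (fun K => box_integral n K h) P) = box_integral n Om h).

Lemma lsum_map_mask {A} (phi : A -> R) (P : list A) (mask : list bool) : length P = length mask ->
  lsum (map phi P) =
    lsum (map (fun Kb : A * bool => phi (fst Kb)) (filter (fun Kb => negb (snd Kb)) (combine P mask)))
  + lsum (map (fun Kb : A * bool => phi (fst Kb)) (filter snd (combine P mask))).
Proof.
  intros H. rewrite <- (map_fst_combine P mask H) at 1. rewrite map_map, (lsum_filter_split _ snd). ring.
Qed.

Section AdaQuad.

Variables (n : nat) (Om : box) (F : box -> Itv) (theta C g rho : R).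
Hypotheses (Hth : 0 < theta < 1) (Hrho : 0 < rho < 1) (HF : holder_const n Om F C g)
  (HFw : forall K, bproper n K -> bsub n K Om -> 0 <= width (F K)).

Let mask P := dorfler theta (map (etaK n F) P).
Let unmarked P := filter (fun Kb : box * bool => negb (snd Kb)) (combine P (mask P)).
Let marked P := filter snd (combine P (mask P)).

Lemma lsum_adaquad_step phi P :
  lsum (map phi (adaquad_step n F theta C g rho P)) =
    lsum (map (fun Kb => phi (fst Kb)) (unmarked P))
  + lsum (map (fun Kb => lsum (map phi (holder_refine n F C g rho (fst Kb)))) (marked P)).
Proof. unfold adaquad_step. now rewrite map_app, lsum_app, lsum_flat_map, map_map. Qed.

Lemma etaK_ge0 K : binterior n K -> bsub n K Om -> 0 <= etaK n F K.
Proof. intros HK HKO. apply Rmult_le_pos; [apply HFw|apply bvol_ge0]; auto using binterior_proper. Qed.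

Lemma partition_etaK_ge0 P K : partition_of n Om P -> In K P -> 0 <= etaK n F K.
Proof. intros [HP _] HK. destruct (HP K HK). now apply etaK_ge0. Qed.

Lemma in_unmarked Kb P : In Kb (unmarked P) -> In (fst Kb) P.
Proof. intros H. apply filter_In in H as [H _]. destruct Kb. now apply in_combine_l in H. Qed.

Lemma in_marked Kb P : In Kb (marked P) -> In (fst Kb) P.
Proof. intros H. apply filter_In in H as [H _]. destruct Kb. now apply in_combine_l in H. Qed.

Lemma mask_spec P : partition_of n Om P ->
  length P = length (mask P) /\
  theta * lsum (map (etaK n F) P) <= lsum (map (fun Kb => etaK n F (fst Kb)) (marked P)).
Proof.
  intros HPart.
  assert (H0 : 0 <= lsum (map (etaK n F) P)) by (apply lsum_map_ge0; intros; eapply partition_etaK_ge0; eauto).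
  destruct (dorfler_spec theta (map (etaK n F) P) ltac:(lra) H0) as [Hlen Hdor]. split.
  - unfold mask. now rewrite Hlen, length_map.
  - rewrite combine_map_l, filter_map_swap, map_map in Hdor. exact Hdor.
Qed.

Lemma adaquad_step_partition P : partition_of n Om P -> partition_of n Om (adaquad_step n F theta C g rho P).
Proof.
  intros HPart. destruct HPart as [HP HI]. split.
  - intros K HK. apply in_app_or in HK. destruct HK as [HK|HK].
    + apply in_map_iff in HK. destruct HK as [Kb [<- HKb]]. now apply HP, (in_unmarked Kb P).
    + apply in_flat_map in HK. destruct HK as [Kb [HKb HK]].
      destruct (HP _ (in_marked Kb P HKb)) as [Hi Hs].
      destruct (holder_refine_sub n Om F C g rho ltac:(lra) HF HFw (fst Kb) Hi Hs K HK).
      eauto using bsub_trans.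
  - intros h Hh. rewrite lsum_adaquad_step, <- (HI h Hh).
    rewrite (lsum_map_mask _ P (mask P)) by now apply mask_spec. f_equal.
    apply lsum_map_ext. intros Kb HKb. destruct (HP _ (in_marked Kb P HKb)) as [Hi Hs].
    now apply (holder_refine_integral n Om F C g rho ltac:(lra) HF HFw).
Qed.

Lemma adaquad_step_eta P : partition_of n Om P ->
  lsum (map (etaK n F) (adaquad_step n F theta C g rho P)) <= (1 - theta * (1 - rho)) * lsum (map (etaK n F) P).
Proof.
  intros HPart. destruct (mask_spec P HPart) as [Hlen Hdor]. pose proof (proj1 HPart) as HP.
  rewrite lsum_adaquad_step, (lsum_map_mask _ P (mask P) Hlen).
  fold (unmarked P) (marked P) in *.
  set (U := lsum (map (fun Kb => etaK n F (fst Kb)) (unmarked P))) in *.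
  set (M := lsum (map (fun Kb => etaK n F (fst Kb)) (marked P))) in *.
  assert (HR : lsum (map (fun Kb => lsum (map (etaK n F) (holder_refine n F C g rho (fst Kb)))) (marked P))
               <= rho * M).
  { unfold M. rewrite <- lsum_map_mull. apply lsum_map_le. intros Kb HKb.
    destruct (HP _ (in_marked Kb P HKb)) as [Hi Hs].
    now apply (holder_refine_eta n Om F C g rho ltac:(lra) HF HFw). }
  assert (0 <= U) by (apply lsum_map_ge0; intros Kb HKb; eapply partition_etaK_ge0, in_unmarked; eauto).
  assert (0 <= M) by (apply lsum_map_ge0; intros Kb HKb; eapply partition_etaK_ge0, in_marked; eauto).
  rewrite (lsum_map_mask _ P (mask P) Hlen) in Hdor. fold (unmarked P) (marked P) U M in Hdor. nra.
Qed.

Lemma adaquad_partition_of : binterior n Om -> forall k, partition_of n Om (adaquad_partition n Om F theta C g rho k).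
Proof.
  intros HOm k. induction k as [|k IH]; simpl; [|now apply adaquad_step_partition].
  split; [intros K [<-|[]]; auto using bsub_refl|intros h _; unfold lsum; simpl; ring].
Qed.

End AdaQuad.

(** * Error estimate *)

Lemma quad_bounds n Qr f K a b : quad_rule n Qr -> binterior n K -> (forall y, inbox n y K -> a <= f y <= b) ->
  a * bvol n K <= quad Qr f K <= b * bvol n K.
Proof.
  intros Hq HK Hf. destruct (Hq K HK) as [Hw Hs]. unfold quad. rewrite <- Hs, <- !lsum_map_mull.
  split; apply lsum_map_le; intros wx Hin; destruct (Hw wx Hin) as [H1 H2]; destruct (Hf (snd wx) H2); nra.
Qed.

Section QuadratureError.

Variables (n : nat) (Om : box) (F : box -> Itv) (Qr : box -> list (R * (nat -> R))) (f : (nat -> R) -> R).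
Hypotheses (Hq : quad_rule n Qr) (Hf : ucb n f) (Hf0 : forall y, 0 <= f y) (HF : enclosure_box n Om f F).

Lemma enclosure_box_bounds K : binterior n K -> bsub n K Om ->
  forall y, inbox n y K -> lo (F K) <= f y <= hi (F K).
Proof. intros HK HKO y Hy. apply HF; auto using binterior_proper. Qed.

(* On each box both the integral and the quadrature lie in [vol K * F K], whose width is [eta_K]. *)
Lemma partition_quadrature_error P : partition_of n Om P ->
  Rabs (box_integral n Om f - lsum (map (quad Qr f) P)) <= lsum (map (etaK n F) P).
Proof.
  intros [HP HI]. rewrite <- (HI f Hf). apply lsum_map_diff_le. intros K HK. destruct (HP K HK) as [Hi Hs].
  pose proof (box_integral_bounds n f K _ _ Hf Hi (enclosure_box_bounds K Hi Hs)).
  pose proof (quad_bounds n Qr f K _ _ Hq Hi (enclosure_box_bounds K Hi Hs)).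
  unfold etaK, width. apply Rabs_le. lra.
Qed.

Lemma root_quadrature_error p P : 1 <= p -> binterior n Om -> partition_of n Om P ->
  Rabs (rpow (box_integral n Om f) (1 / p) - rpow (lsum (map (quad Qr f) P)) (1 / p))
  <= rpow (lsum (map (etaK n F) P)) (1 / p).
Proof.
  intros Hp HOm HPart. apply rpow_diff_le.
  - enough (0 * bvol n Om <= box_integral n Om f <= hi (F Om) * bvol n Om) by lra.
    apply box_integral_bounds; auto. intros y Hy. split; auto.
    apply (enclosure_box_bounds Om HOm (bsub_refl n Om) y Hy).
  - apply lsum_map_ge0. intros K HK. destruct (proj1 HPart K HK) as [Hi Hs].
    enough (0 * bvol n K <= quad Qr f K <= hi (F K) * bvol n K) by lra.
    apply quad_bounds; auto. intros y Hy. split; auto.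
    apply (enclosure_box_bounds K Hi Hs y Hy).
  - now apply partition_quadrature_error.
  - split; [apply Rdiv_lt_0_compat; lra|]. unfold Rdiv. rewrite Rmult_1_l.
    rewrite <- Rinv_1. apply Rinv_le_contravar; lra.
Qed.

End QuadratureError.

Lemma f_Phi_ge0 N s p x : 0 <= f_Phi N s p x.
Proof.
  apply rsum_ge0. intros i _. repeat apply Rplus_le_le_0_compat;
    repeat (apply rsum_ge0; intros); apply rpow_ge0.
Qed.

Lemma sobolev_norm_eq N s s' s'' p Om :
  (forall x, is_derive s x (s' x)) -> (forall x, is_derive s' x (s'' x)) -> (forall x, continuous s'' x) ->
  1 <= p -> sobolev_norm N s p Om = rpow (box_integral (nd N 0) Om (f_Phi N s p)) (1 / p).
Proof.
  intros Hs Hs' Hs'' Hp. unfold sobolev_norm, box_integral, f_Phi. cbv zeta. f_equal.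
  set (n := nd N 0).
  assert (U0 := ucb_pow_Phi N s s' p Hs Hp).
  assert (U1 := ucb_pow_pd_Phi N s s' s'' p Hs Hs' Hp).
  assert (U2 := ucb_pow_pd_pd_Phi N s s' s'' p Hs Hs' Hs'' Hp).
  rewrite (iint_rsum n Om _ (fun i x => _ + _ + _)) by (intros; repeat apply ucb_add; auto;
    repeat (apply (ucb_rsum n _ (fun j x => _)); intros); auto).
  apply rsum_ext. intros i _.
  rewrite !(iint_plus n Om) by (repeat apply ucb_add; auto;
    repeat (apply (ucb_rsum n _ (fun j x => _)); intros); auto).
  rewrite !(iint_rsum n Om _ (fun j x => _)) by (intros; repeat (apply (ucb_rsum n _ (fun j x => _)); intros); auto).
  f_equal. apply rsum_ext. intros j _. now rewrite (iint_rsum n Om _ (fun t x => _)).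
Qed.

Theorem corollary4p19
  (p theta rho : R) (N : Net) (Om : box)
  (s s' s'' : R -> R) (Sg Sg1 Sg2 : Itv -> Itv)
  (Qr : box -> list (R * (nat -> R))) :
  1 <= p -> 0 < theta < 1 -> 0 < rho < 1 ->
  (forall l, (l <= nL N + 1)%nat -> (0 < nd N l)%nat) ->
  binterior (nd N 0) Om ->
  (forall x, is_derive s x (s' x)) ->
  (forall x, is_derive s' x (s'' x)) ->
  enclosure_IR s Sg -> enclosure_IR s' Sg1 -> enclosure_IR s'' Sg2 ->
  holder_IR Sg -> holder_IR Sg1 -> holder_IR Sg2 ->
  quad_rule (nd N 0) Qr ->
  cont_Rn (nd N 0) (f_Phi N s p)
  /\ enclosure_box (nd N 0) Om (f_Phi N s p) (F_Phi N Sg Sg1 Sg2 p)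
  /\ holder_box (nd N 0) Om (F_Phi N Sg Sg1 Sg2 p)
  /\ forall C g, holder_const (nd N 0) Om (F_Phi N Sg Sg1 Sg2 p) C g ->
     forall n : nat,
       Rabs (sobolev_norm N s p Om
             - rpow (adaquad_Q (nd N 0) Om (F_Phi N Sg Sg1 Sg2 p) theta C g rho Qr
                               (f_Phi N s p) n) (1 / p))
         <= rpow (adaquad_eta (nd N 0) Om (F_Phi N Sg Sg1 Sg2 p) theta C g rho n) (1 / p)
       /\ adaquad_eta (nd N 0) Om (F_Phi N Sg Sg1 Sg2 p) theta C g rho (S n)
          <= (1 - theta * (1 - rho))
             * adaquad_eta (nd N 0) Om (F_Phi N Sg Sg1 Sg2 p) theta C g rho n.
Proof.
  intros Hp Hth Hrho Hnd HOm Hs Hs' E0 E1 E2 H0 H1 H2 Hq.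
  assert (HW : 0 < bwidth (nd N 0) Om) by (apply bwidth_gt0; auto; apply Hnd; lia).
  assert (Hs'' := holder_enclosure_continuous s'' Sg2 E2 H2).
  assert (Hf := ucb_f_Phi N s s' s'' p Hs Hs' Hs'' Hp).
  assert (HF := ih_F_Phi N Om s s' s'' Sg Sg1 Sg2 HW E0 E1 E2 H0 H1 H2 p Hp).
  assert (Henc : enclosure_box (nd N 0) Om (f_Phi N s p) (F_Phi N Sg Sg1 Sg2 p)).
  { split; [apply HF|]. intros. apply (f_Phi_in_F_Phi N s s' s''); auto; lra. }
  split; [now apply ucb_cont_Rn|split; [exact Henc|split; [apply HF|]]].
  intros C g HCg k.
  assert (HFw : forall K, bproper (nd N 0) K -> bsub (nd N 0) K Om -> 0 <= width (F_Phi N Sg Sg1 Sg2 p K))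
    by (intros; apply width_ge0, HF; auto).
  assert (HP := adaquad_partition_of _ _ _ theta C g rho Hth Hrho HCg HFw HOm k).
  split.
  - rewrite (sobolev_norm_eq N s s' s'') by auto.
    apply root_quadrature_error; auto using f_Phi_ge0.
  - exact (adaquad_step_eta _ _ _ theta C g rho Hth Hrho HCg HFw _ HP).
Qed.
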